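(* Fix $\gamma \in (\tfrac{2}{3},2)$. Assume $x \in B_1^+(\mathrm{VI}_0)$ has an $\alpha$-limit point $y \in \mathscr{K}_2 \cup \mathscr{K}_3$. Then the image $K(y)$ of $y$ under the Kasner map is also contained in $\alpha(x)$.
   Context: Set $q^* := \tfrac{3\gamma-2}{2} \in (0,2)$. On $\mathbb{R}^5$ with coordinates $(\Sigma_+,\Sigma_-,N_+,N_-,\Omega)$ consider the system (with $' = d/d\tau$) $\Sigma_+' = -(2-q)\Sigma_+ - 2N_-^2$, $\Sigma_-' = -(2-q)\Sigma_- - 2\sqrt{3}N_+N_-$, $N_+' = (q+2\Sigma_+)N_+ + 2\sqrt{3}\Sigma_- N_-$, $N_-' = (q+2\Sigma_+)N_- + 2\sqrt{3}\Sigma_- N_+$, $\Omega' = 2(q-q^* )\Omega$, where $q := 2(\Sigma_+^2+\Sigma_-^2) + q^*\Omega$. The phase space $B_1^+(\mathrm{VI}_0)$ is the set of points satisfying $\Omega + \Sigma_+^2 + \Sigma_-^2 + N_-^2 = 1$, $\Omega \ge 0$ and $N_- > |N_+|$; it is invariant, solutions exist for all $\tau$, and $\varphi^\tau(x)$ denotes the flow. The $\alpha$-limit set $\alpha(x)$ is the set of all limits of $\varphi^{\tau_k}(x)$ with $\tau_k \to -\infty$. The Kasner circle is $\mathscr{K} := \{\Sigma_+^2+\Sigma_-^2 = 1,\ N_+=N_-=0,\ \Omega=0\}$ (a circle of equilibria). The Taub points are the points of $\mathscr{K}$ with $(\Sigma_+,\Sigma_-) = (-1,0)$ ($T_1$),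 $(\tfrac12,\tfrac{\sqrt3}{2})$ ($T_2$), $(\tfrac12,-\tfrac{\sqrt3}{2})$ ($T_3$). They split $\mathscr{K}$ into three open arcs: $\mathscr{K}_1$ is the arc with endpoints $T_2,T_3$ not containing $T_1$, $\mathscr{K}_2$ the arc with endpoints $T_1,T_3$ not containing $T_2$, and $\mathscr{K}_3$ the arc with endpoints $T_1,T_2$ not containing $T_3$. The Kasner map $K:\mathscr{K}\to\mathscr{K}$ sends $x \in \mathscr{K}$ to the $\alpha$-limit point of the vacuum Bianchi type II orbit having $x$ as its $\omega$-limit point; concretely, $K(T_j)=T_j$, and for $x \in \mathscr{K}_j$ the point $K(x)$ is the second intersection point of $\mathscr{K}$ (in the $(\Sigma_+,\Sigma_-)$-plane) with the straight line through $x$ and $C_j$, where $C_1 = (2,0)$, $C_2 = (-1,-\sqrt3)$, $C_3 = (-1,\sqrt3)$. *)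

From Stdlib Require Import Reals Lra.
Open Scope R_scope.

(* A point of R^5 with coordinates (Sigma_+, Sigma_-, N_+, N_-, Omega). *)
Record state := mkState { Sp : R; Sm : R; Np : R; Nm : R; Om : R }.

Definition qstar (gamma : R) : R := (3 * gamma - 2) / 2.

Definition qfun (gamma : R) (x : state) : R :=
  2 * (Sp x ^ 2 + Sm x ^ 2) + qstar gamma * Om x.

Definition is_solution (gamma : R) (phi : R -> state) : Prop :=
  forall t : R,
    let x := phi t in
    let q := qfun gamma x in
    derivable_pt_lim (fun s => Sp (phi s)) t
      (- (2 - q) * Sp x - 2 * Nm x ^ 2) /\
    derivable_pt_lim (fun s => Sm (phi s)) t
      (- (2 - q) * Sm x - 2 * sqrt 3 * Np x * Nm x) /\
    derivable_pt_lim (fun s => Np (phi s)) t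
      ((q + 2 * Sp x) * Np x + 2 * sqrt 3 * Sm x * Nm x) /\
    derivable_pt_lim (fun s => Nm (phi s)) t
      ((q + 2 * Sp x) * Nm x + 2 * sqrt 3 * Sm x * Np x) /\
    derivable_pt_lim (fun s => Om (phi s)) t
      (2 * (q - qstar gamma) * Om x).

Definition in_B1plus (x : state) : Prop :=
  Om x + Sp x ^ 2 + Sm x ^ 2 + Nm x ^ 2 = 1 /\ 0 <= Om x /\ Nm x > Rabs (Np x).

Definition alpha_limit_point (phi : R -> state) (y : state) : Prop :=
  exists tau : nat -> R,
    (forall M : R, exists N : nat, forall k : nat, (k >= N)%nat -> tau k < M) /\
    Un_cv (fun k => Sp (phi (tau k))) (Sp y) /\
    Un_cv (fun k => Sm (phi (tau k))) (Sm y) /\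
    Un_cv (fun k => Np (phi (tau k))) (Np y) /\
    Un_cv (fun k => Nm (phi (tau k))) (Nm y) /\
    Un_cv (fun k => Om (phi (tau k))) (Om y).

(* Points of the (Sigma_+, Sigma_-)-plane. *)
Definition pt := (R * R)%type.

Definition on_circle (p : pt) : Prop := fst p ^ 2 + snd p ^ 2 = 1.

Definition kasner_state (p : pt) : state := mkState (fst p) (snd p) 0 0 0.

Definition T1 : pt := (-1, 0).
Definition T2 : pt := (1/2, sqrt 3 / 2).
Definition T3 : pt := (1/2, - (sqrt 3 / 2)).
Definition C1 : pt := (2, 0).
Definition C2 : pt := (-1, - sqrt 3).
Definition C3 : pt := (-1, sqrt 3).

Definition side (a b p : pt) : R :=
  (fst b - fst a) * (snd p - snd a) - (snd b - snd a) * (fst p - fst a).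

(* The open arc of the unit circle with endpoints a, b not containing c
   (the connected component of circle \ {a,b} not containing c): these are
   the circle points strictly on the other side of the chord ab than c. *)
Definition in_open_arc (a b c p : pt) : Prop :=
  on_circle p /\ side a b p * side a b c < 0.

Definition K1arc (p : pt) : Prop := in_open_arc T2 T3 T1 p.
Definition K2arc (p : pt) : Prop := in_open_arc T1 T3 T2 p.
Definition K3arc (p : pt) : Prop := in_open_arc T1 T2 T3 p.

Definition on_line (p c z : pt) : Prop := side p c z = 0.

Definition kasner_map_rel (p z : pt) : Prop :=
  (p = T1 /\ z = T1) \/ (p = T2 /\ z = T2) \/ (p = T3 /\ z = T3) \/
  (K1arc p /\ on_circle z /\ on_line p C1 z /\ z <> p) \/
  (K2arc p /\ on_circle z /\ on_line p C2 z /\ z <> p) \/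
  (K3arc p /\ on_circle z /\ on_line p C3 z /\ z <> p).

From Stdlib Require Import Reals Lra Lia Psatz.
From Stdlib Require Import Classical_Prop FunctionalExtensionality IndefiniteDescription.
From Coquelicot Require Import Coquelicot.
Open Scope R_scope.

(* Reverse time and, for y in K_3, reflect (Sigma_-, N_+) -> -(Sigma_-, N_+), so that y lies
   in K_2.  Near y, Omega and P = N_- - N_+ then decay while M = N_- + N_+ grows.  When
   Omega = P = 0 (vacuum Bianchi II) the vector s - C2, s = (Sigma_+, Sigma_-), is only
   rescaled, so these orbits are chords through C2 and the one through y ends at K(y).  In
   general, writing s - C2 = along d + across d^perp with d = y - C2, the slope across/along
   has derivative O(W), W = Omega + P.  Take a time at which the orbit is very close to y
   and W is tiny.  While s stays near y, W decreases and M grows exponentially, so the orbit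
   leaves y after a finite time with its slope still tiny; afterwards the constraint keeps q
   below 2, so "along" increases at a definite rate and reaches its value at K(y) in bounded
   time, during which W grows at most exponentially.  Hence the orbit passes arbitrarily
   close to K(y) at arbitrarily early times. *)

Lemma Rabs_le_of_sqr_le (x c : R) : 0 <= c -> x * x <= c * c -> Rabs x <= c.
Proof. intros Hc H. apply Rabs_le. nra. Qed.

Lemma Rmin_spec a b : 0 < a -> 0 < b -> 0 < Rmin a b /\ Rmin a b <= a /\ Rmin a b <= b.
Proof. intros. repeat split; [apply Rmin_glb_lt | apply Rmin_l | apply Rmin_r]; auto. Qed.

Lemma sign_cases sg : sg * sg = 1 -> sg = 1 \/ sg = -1.
Proof.
  intros Hsg. assert (E : (sg - 1) * (sg + 1) = 0) by lra.
  apply Rmult_integral in E as [|]; [left|right]; lra.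
Qed.

Lemma Rabs_sign_mult sg x : sg * sg = 1 -> Rabs (sg * x) = Rabs x.
Proof.
  intros Hsg. rewrite Rabs_mult.
  destruct (sign_cases sg Hsg) as [-> | ->]; [rewrite Rabs_R1 | rewrite Rabs_m1]; ring.
Qed.

Lemma sqrt3_sqr : sqrt 3 * sqrt 3 = 3.
Proof. apply sqrt_sqrt; lra. Qed.

Lemma sqrt3_pow2 : sqrt 3 ^ 2 = 3.
Proof. simpl. rewrite Rmult_1_r. exact sqrt3_sqr. Qed.

Lemma sqrt3_bounds : 1.7 < sqrt 3 < 1.8.
Proof. pose proof sqrt3_sqr. pose proof (sqrt_pos 3). split; nra. Qed.

Lemma derivable_pt_lim_val (f : R -> R) x l l' :
  l = l' -> derivable_pt_lim f x l -> derivable_pt_lim f x l'.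
Proof. now intros <-. Qed.

Lemma derivable_pt_lim_cont (f : R -> R) x l :
  derivable_pt_lim f x l -> continuity_pt f x.
Proof. intros H. apply derivable_continuous_pt. now exists l. Qed.

Lemma derivable_pt_lim_reverse (f df : R -> R) :
  (forall t, derivable_pt_lim f t (df t)) ->
  forall t, derivable_pt_lim (fun s => f (- s)) t (- df (- t)).
Proof.
  intros Hf t.
  assert (H := derivable_pt_lim_comp (fun s => - s) f t (-1) (df (- t))
     (derivable_pt_lim_opp _ _ _ (derivable_pt_lim_id t)) (Hf (- t))).
  eapply derivable_pt_lim_val; [|exact H]. ring.
Qed.

Lemma derivable_pt_lim_pow2 (f : R -> R) x l :
  derivable_pt_lim f x l -> derivable_pt_lim (fun s => f s ^ 2) x (2 * f x * l).
Proof.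
  intros H.
  replace (fun s => f s ^ 2) with (fun s => f s * f s)
    by (apply functional_extensionality; intros; ring).
  eapply derivable_pt_lim_val; [|exact (derivable_pt_lim_mult f f x l l H H)]. ring.
Qed.

Ltac derive_poly :=
  repeat first
    [ apply derivable_pt_lim_pow2 | apply derivable_pt_lim_plus
    | apply derivable_pt_lim_minus | apply derivable_pt_lim_opp
    | apply derivable_pt_lim_mult | apply derivable_pt_lim_const
    | apply derivable_pt_lim_id | eassumption
    | match goal with
      | H : forall t, derivable_pt_lim ?f t _ |- derivable_pt_lim ?f _ _ => apply H
      end ].

Lemma nonpos_derivative_decreasing (f df : R -> R) (a b : R) :
  a <= b ->
  (forall t, a <= t <= b -> derivable_pt_lim f t (df t)) ->
  (forall t, a <= t <= b -> df t <= 0) -> f b <= f a.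
Proof.
  intros Hab Hd Hs. destruct (Req_dec a b) as [->|Hne]; [lra|].
  destruct (MVT_cor2 f df a b ltac:(lra) Hd) as [c [Hc1 Hc2]].
  assert (df c <= 0) by (apply Hs; lra). nra.
Qed.

Lemma nonneg_derivative_increasing (f df : R -> R) (a b : R) :
  a <= b ->
  (forall t, a <= t <= b -> derivable_pt_lim f t (df t)) ->
  (forall t, a <= t <= b -> 0 <= df t) -> f a <= f b.
Proof.
  intros Hab Hd Hs.
  enough (- f b <= - f a) by lra.
  apply (nonpos_derivative_decreasing (fun t => - f t) (fun t => - df t) a b Hab).
  - intros t Ht. now apply derivable_pt_lim_opp, Hd.
  - intros t Ht. specialize (Hs t Ht). lra.
Qed.

Lemma Rabs_deriv_dominated (f df F dF : R -> R) a b :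
  a <= b -> (forall t, a <= t <= b -> derivable_pt_lim f t (df t)) ->
  (forall t, a <= t <= b -> derivable_pt_lim F t (dF t)) ->
  (forall t, a <= t <= b -> Rabs (df t) <= dF t) ->
  Rabs (f b) <= Rabs (f a) + (F b - F a).
Proof.
  intros Hab Hf HF Hdom.
  assert (Hup : f b - F b <= f a - F a).
  { apply (nonpos_derivative_decreasing (fun t => f t - F t) (fun t => df t - dF t)); auto.
    - intros t Ht. apply derivable_pt_lim_minus; auto.
    - intros t Ht. specialize (Hdom t Ht). apply Rabs_le_between in Hdom. lra. }
  assert (Hlo : - f b - F b <= - f a - F a).
  { apply (nonpos_derivative_decreasing (fun t => - f t - F t) (fun t => - df t - dF t));
      auto.
    - intros t Ht. apply derivable_pt_lim_minus; [apply derivable_pt_lim_opp|]; auto.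
    - intros t Ht. specialize (Hdom t Ht). apply Rabs_le_between in Hdom. lra. }
  pose proof (Rle_abs (f a)). pose proof (Rle_abs (- f a)). rewrite Rabs_Ropp in *.
  apply Rabs_le. lra.
Qed.

Lemma gronwall_upper (f df : R -> R) c a b :
  a <= b -> (forall t, a <= t <= b -> derivable_pt_lim f t (df t)) ->
  (forall t, a <= t <= b -> df t <= c * f t) -> f b <= f a * exp (c * (b - a)).
Proof.
  intros Hab Hd Hs.
  set (h := fun t => f t * exp (- c * t)).
  assert (Hh : h b <= h a).
  { apply (nonpos_derivative_decreasing h (fun t => (df t - c * f t) * exp (- c * t))); auto.
    - intros t Ht. unfold h.
      eapply derivable_pt_lim_val;
        [|apply derivable_pt_lim_mult; [now apply Hd|];
          apply (derivable_pt_lim_comp (fun t => - c * t) exp);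
          [apply (derivable_pt_lim_scal (fun t => t)), derivable_pt_lim_id
          |apply derivable_pt_lim_exp]].
      cbv beta; ring.
    - intros t Ht. specialize (Hs t Ht). assert (H2 := exp_pos (- c * t)). nra. }
  unfold h in Hh.
  replace (f a * exp (c * (b - a))) with (f a * exp (- c * a) * exp (c * b))
    by (rewrite Rmult_assoc, <- exp_plus; do 2 f_equal; ring).
  replace (f b) with (f b * exp (- c * b) * exp (c * b))
    by (rewrite Rmult_assoc, <- exp_plus; replace (- c * b + c * b) with 0 by ring;
        rewrite exp_0; ring).
  apply Rmult_le_compat_r; [apply Rlt_le, exp_pos | exact Hh].
Qed.

Lemma gronwall_lower (f df : R -> R) c a b :
  a <= b -> (forall t, a <= t <= b -> derivable_pt_lim f t (df t)) ->
  (forall t, a <= t <= b -> c * f t <= df t) -> f a * exp (c * (b - a)) <= f b.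
Proof.
  intros Hab Hd Hs.
  enough (- f b <= - f a * exp (c * (b - a))) by lra.
  apply (gronwall_upper (fun t => - f t) (fun t => - df t) c a b Hab).
  - intros t Ht. now apply derivable_pt_lim_opp, Hd.
  - intros t Ht. specialize (Hs t Ht). lra.
Qed.

Lemma derivable_pt_lim_RInt_0 (a : R -> R) :
  (forall t, continuity_pt a t) ->
  forall t, derivable_pt_lim (fun s => RInt a 0 s) t (a t).
Proof.
  intros Hc t. apply is_derive_Reals.
  apply (is_derive_RInt a (fun s => RInt a 0 s) 0 t).
  - apply filter_forall. intros b. apply (@RInt_correct R_CompleteNormedModule).
    apply (@ex_RInt_continuous R_CompleteNormedModule).
    intros z _. now apply continuity_pt_filterlim.
  - now apply continuity_pt_filterlim.
Qed.

Lemma linear_ode_solution (f a : R -> R) :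
  (forall t, derivable_pt_lim f t (a t * f t)) ->
  (forall t, continuity_pt a t) ->
  forall t, f t = f 0 * exp (RInt a 0 t).
Proof.
  intros Hf Hc.
  set (h := fun s => f s * exp (- RInt a 0 s)).
  assert (Hh : forall t, derivable_pt_lim h t 0).
  { intros t. unfold h.
    eapply derivable_pt_lim_val;
      [|apply derivable_pt_lim_mult; [apply Hf|];
        apply (derivable_pt_lim_comp (fun s => - RInt a 0 s) exp);
        [apply derivable_pt_lim_opp, derivable_pt_lim_RInt_0; auto
        |apply derivable_pt_lim_exp]].
    cbv beta; ring. }
  assert (Hconst : forall t, h t = h 0).
  { intros t. destruct (Rle_or_lt 0 t); apply Rle_antisym.
    - apply (nonpos_derivative_decreasing h (fun _ => 0) 0 t); auto; intros; lra.
    - apply (nonneg_derivative_increasing h (fun _ => 0) 0 t); auto; intros; lra.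
    - apply (nonneg_derivative_increasing h (fun _ => 0) t 0); auto; intros; lra.
    - apply (nonpos_derivative_decreasing h (fun _ => 0) t 0); auto; intros; lra. }
  assert (H0 : h 0 = f 0).
  { unfold h. rewrite RInt_point.
    change (@zero (CompleteNormedModule.AbelianMonoid R_AbsRing R_CompleteNormedModule))
      with 0.
    rewrite Ropp_0, exp_0; ring. }
  intros t. rewrite <- H0, <- (Hconst t). unfold h.
  rewrite Rmult_assoc, <- exp_plus.
  replace (- RInt a 0 t + RInt a 0 t) with 0 by ring. rewrite exp_0; ring.
Qed.

Lemma continuity_pt_cst (c x : R) : continuity_pt (fun _ => c) x.
Proof. now apply continuity_pt_const. Qed.

Lemma continuity_pt_Rmax (f g : R -> R) x :
  continuity_pt f x -> continuity_pt g x ->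
  continuity_pt (fun s => Rmax (f s) (g s)) x.
Proof.
  intros Hf Hg.
  apply (continuity_pt_ext (fun s => (f s + g s + Rabs (f s - g s)) / 2)).
  { intros s. unfold Rmax. destruct (Rle_dec (f s) (g s)).
    - rewrite Rabs_left1; lra.
    - rewrite Rabs_right; lra. }
  apply (continuity_pt_mult _ (fun _ => / 2)); [|apply continuity_pt_cst].
  apply continuity_pt_plus; [now apply continuity_pt_plus|].
  apply (continuity_pt_comp (fun s => f s - g s) Rabs);
    [now apply continuity_pt_minus | apply Rcontinuity_abs].
Qed.

Lemma continuity_pt_sign_nbhd (f : R -> R) (c : R) :
  continuity_pt f c -> f c <> 0 ->
  exists d, d > 0 /\ forall t, Rabs (t - c) < d -> f t * f c > 0.
Proof.
  intros H Hc.
  assert (He : Rabs (f c) / 2 > 0) by (apply Rabs_pos_lt in Hc; lra).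
  destruct (H _ He) as [d [Hd Hd2]].
  exists d; split; [lra|]. intros t Ht.
  destruct (Req_dec t c) as [->|Hne]; [nra|].
  assert (Hr : Rabs (f t - f c) < Rabs (f c) / 2).
  { apply (Hd2 t). split; [split; [exact I| auto] | exact Ht]. }
  apply Rabs_def2 in Hr.
  destruct (Rle_or_lt 0 (f c)).
  - rewrite (Rabs_right (f c)) in Hr; [nra|lra].
  - rewrite (Rabs_left (f c)) in Hr; [nra|lra].
Qed.

Lemma first_zero_crossing (f : R -> R) (a b : R) :
  (forall t, continuity_pt f t) -> a < b -> f a < 0 -> 0 <= f b ->
  exists c, a < c <= b /\ f c = 0 /\ forall t, a <= t < c -> f t < 0.
Proof.
  intros Hc Hab Ha Hb.
  set (E := fun x => a <= x <= b /\ forall t, a <= t <= x -> f t < 0).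
  assert (Ea : E a) by (split; [lra| intros t Ht; now replace t with a by lra]).
  destruct (completeness E) as [c [Hub Hlub]];
    [exists b; intros x [Hx _]; lra | now exists a |].
  assert (Hac : a <= c) by now apply Hub.
  assert (Hcb : c <= b) by (apply Hlub; intros x [Hx _]; lra).
  assert (Hbelow : forall t, a <= t < c -> f t < 0).
  { intros t Ht.
    destruct (classic (exists x, E x /\ t <= x)) as [[x [[_ Hx] Htx]]|Hno]; [apply Hx; lra|].
    enough (c <= t) by lra.
    apply Hlub. intros x Ex. apply Rnot_lt_le. intros Htx. apply Hno. exists x. split; auto; lra. }
  destruct (Rtotal_order (f c) 0) as [Hn|[Hz|Hp]].
  - exfalso.
    destruct (continuity_pt_sign_nbhd f c (Hc c) ltac:(lra)) as [d [Hd Hnear]].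
    assert (Hcb' : c < b) by (destruct (Req_dec c b) as [->|]; lra).
    set (x := Rmin b (c + d/2)).
    assert (Hx : c < x <= c + d/2)
      by (unfold x; split; [apply Rmin_glb_lt; lra | apply Rmin_r]).
    enough (E x) by (assert (x <= c) by (now apply Hub); lra).
    split; [split; [lra | apply Rmin_l]|].
    intros t Ht. destruct (Rlt_or_le t c); [apply Hbelow; lra|].
    assert (f t * f c > 0) by (apply Hnear, Rabs_def1; lra). nra.
  - exists c. repeat split; auto. destruct (Req_dec a c) as [<-|]; lra.
  - exfalso.
    destruct (continuity_pt_sign_nbhd f c (Hc c) ltac:(lra)) as [d [Hd Hnear]].
    enough (c <= c - d/2) by lra.
    apply Hlub. intros x [Hx Hneg]. apply Rnot_lt_le. intros Hxd.
    assert (x <= c) by (apply Hub; split; auto).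
    assert (f x < 0) by (apply Hneg; lra).
    assert (f x * f c > 0) by (apply Hnear, Rabs_def1; lra). nra.
Qed.

Lemma stays_above (f df : R -> R) c a b :
  (forall t, continuity_pt f t) -> (forall t, a <= t <= b -> derivable_pt_lim f t (df t)) ->
  c < f a -> (forall t, a <= t <= b -> c <= f t -> 0 <= df t) ->
  forall t, a <= t <= b -> c <= f t.
Proof.
  intros Hc Hd Ha Hdf s Hs.
  destruct (Rle_or_lt c (f s)) as [|Hlt]; auto. exfalso.
  assert (Has : a < s) by (destruct (Req_dec a s) as [<-|]; lra).
  destruct (first_zero_crossing (fun t => c - f t) a s) as (t1 & Ht1 & Hz & Hbefore);
    cbv beta in *; try lra.
  { intros t. apply continuity_pt_minus; [apply continuity_pt_cst | apply Hc]. }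
  enough (f a <= f t1) by lra.
  apply (nonneg_derivative_increasing f df); [lra | intros; apply Hd; lra |].
  intros t Ht. apply Hdf; [lra|].
  destruct (Req_dec t t1) as [->|]; [lra|]. specialize (Hbefore t ltac:(lra)). lra.
Qed.

Lemma first_exit (g1 g2 g3 : R -> R) t0 T :
  (forall t, continuity_pt g1 t) -> (forall t, continuity_pt g2 t) ->
  (forall t, continuity_pt g3 t) ->
  g1 t0 < 0 -> g2 t0 < 0 -> g3 t0 < 0 -> t0 <= T ->
  (forall t, t0 <= t <= T -> g1 t < 0 /\ g2 t < 0 /\ g3 t < 0) \/
  exists ts, t0 < ts <= T /\
    (forall t, t0 <= t <= ts -> g1 t <= 0 /\ g2 t <= 0 /\ g3 t <= 0) /\
    (g1 ts = 0 \/ g2 ts = 0 \/ g3 ts = 0).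
Proof.
  intros C1 C2 C3 H1 H2 H3 HT.
  set (F := fun t => Rmax (g1 t) (Rmax (g2 t) (g3 t))).
  assert (Hge : forall t, g1 t <= F t /\ g2 t <= F t /\ g3 t <= F t).
  { intros t. unfold F. pose proof (Rmax_l (g2 t) (g3 t)). pose proof (Rmax_r (g2 t) (g3 t)).
    pose proof (Rmax_l (g1 t) (Rmax (g2 t) (g3 t))).
    pose proof (Rmax_r (g1 t) (Rmax (g2 t) (g3 t))). lra. }
  assert (Hattained : forall t, F t = g1 t \/ F t = g2 t \/ F t = g3 t)
    by (intros t; unfold F, Rmax; repeat destruct Rle_dec; auto).
  assert (HF0 : F t0 < 0) by (unfold F; now repeat apply Rmax_lub_lt).
  destruct (classic (exists t, t0 <= t <= T /\ 0 <= F t)) as [[t [Ht HFt]]|Hno].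
  - right. assert (t0 < t) by (destruct (Req_dec t0 t) as [<-|]; lra).
    destruct (first_zero_crossing F t0 t) as (ts & Hts & HFts & Hbefore); auto.
    { intros s. unfold F. repeat apply continuity_pt_Rmax; auto. }
    exists ts. split; [lra|split].
    + intros s Hs. specialize (Hge s).
      destruct (Req_dec s ts) as [->|]; [lra|]. specialize (Hbefore s ltac:(lra)). lra.
    + destruct (Hattained ts) as [E|[E|E]]; rewrite E in HFts; auto.
  - left. intros t Ht. specialize (Hge t).
    assert (F t < 0) by (apply Rnot_le_lt; intros ?; apply Hno; now exists t). lra.
Qed.

(** * Invariants of the flow *)

Section Flow.
Variables (gamma : R) (phi : R -> state).
Hypothesis Hsol : is_solution gamma phi.
Hypothesis H0 : in_B1plus (phi 0).

Lemma solution_continuous t :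
  continuity_pt (fun s => Sp (phi s)) t /\ continuity_pt (fun s => Sm (phi s)) t /\
  continuity_pt (fun s => Om (phi s)) t.
Proof.
  destruct (Hsol t) as (HSp & HSm & _ & _ & HOm).
  repeat split; eapply derivable_pt_lim_cont; eassumption.
Qed.

Lemma q_continuous t : continuity_pt (fun s => qfun gamma (phi s)) t.
Proof.
  destruct (solution_continuous t) as (CSp & CSm & COm). unfold qfun.
  repeat first [ apply continuity_pt_plus | apply continuity_pt_mult
               | apply continuity_pt_cst | assumption ].
Qed.

Lemma constraint_preserved t :
  Om (phi t) + Sp (phi t) ^ 2 + Sm (phi t) ^ 2 + Nm (phi t) ^ 2 = 1.
Proof.
  set (G := fun s => Om (phi s) + Sp (phi s) ^ 2 + Sm (phi s) ^ 2 + Nm (phi s) ^ 2 - 1).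
  assert (HG : forall s, derivable_pt_lim G s (2 * qfun gamma (phi s) * G s)).
  { intros s. destruct (Hsol s) as (HSp & HSm & _ & HNm & HOm).
    eapply derivable_pt_lim_val; [|unfold G; derive_poly].
    unfold G, qfun. cbv beta. ring. }
  assert (HGc : forall s, continuity_pt (fun s => 2 * qfun gamma (phi s)) s).
  { intros s. apply continuity_pt_mult; [apply continuity_pt_cst | apply q_continuous]. }
  pose proof (linear_ode_solution G _ HG HGc t) as E.
  destruct H0 as [Hc0 _]. unfold G in E. rewrite Hc0 in E. lra.
Qed.

Lemma Om_nonneg t : 0 <= Om (phi t).
Proof.
  pose proof (linear_ode_solution (fun s => Om (phi s))
                (fun s => 2 * (qfun gamma (phi s) - qstar gamma))) as E.
  rewrite E; clear E.
  - destruct H0 as (_ & HOm & _).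
    pose proof (exp_pos (RInt (fun s => 2 * (qfun gamma (phi s) - qstar gamma)) 0 t)). nra.
  - intros s. apply (Hsol s).
  - intros s. apply continuity_pt_mult; [apply continuity_pt_cst|].
    apply continuity_pt_minus; [apply q_continuous | apply continuity_pt_cst].
Qed.

Lemma Nm_plus_Np_pos sg t : sg * sg = 1 -> 0 < Nm (phi t) + sg * Np (phi t).
Proof.
  intros Hsg.
  set (a := fun s => qfun gamma (phi s) + 2 * Sp (phi s) + 2 * sqrt 3 * sg * Sm (phi s)).
  pose proof (linear_ode_solution (fun s => Nm (phi s) + sg * Np (phi s)) a) as E.
  rewrite E; clear E.
  - assert (HN : 0 < Nm (phi 0) + sg * Np (phi 0)).
    { destruct H0 as (_ & _ & HN).
      pose proof (Rle_abs (- (sg * Np (phi 0)))) as Habs.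
      rewrite Rabs_Ropp, Rabs_sign_mult in Habs by exact Hsg. lra. }
    pose proof (exp_pos (RInt a 0 t)). nra.
  - intros s. destruct (Hsol s) as (_ & _ & HNp & HNm & _).
    eapply derivable_pt_lim_val; [|derive_poly].
    unfold a. cbv beta. apply Rminus_diag_uniq.
    transitivity ((1 - sg * sg) * (2 * sqrt 3 * Sm (phi s) * Np (phi s))); [ring|].
    rewrite Hsg. ring.
  - intros s. destruct (solution_continuous s) as (CSp & CSm & COm). unfold a.
    repeat first [ apply continuity_pt_plus | apply continuity_pt_mult | apply q_continuous
                 | apply continuity_pt_cst | assumption ].
Qed.
End Flow.

(** * The Kasner map on K_2 and K_3 *)

(* Positive exactly on K_2; near the Kasner point (u1, u2) the sum
   N_- + N_+ grows at rate about 2 ell u1 u2 as tau decreases. *)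
Definition ell (u1 u2 : R) : R := - 1 - u1 - sqrt 3 * u2.

Definition dir1 (u1 : R) : R := u1 + 1.
Definition dir2 (u2 : R) : R := u2 + sqrt 3.
Definition dnorm2 (u1 u2 : R) : R := dir1 u1 ^ 2 + dir2 u2 ^ 2.

(* C2 has power |C2|^2 - 1 = 3 with respect to the unit circle, so the second intersection
   of the circle with the line through C2 and u is C2 + 3 (u - C2) / |u - C2|^2. *)
Definition kasner_image (u1 u2 : R) : pt :=
  (-1 + 3 * dir1 u1 / dnorm2 u1 u2, - sqrt 3 + 3 * dir2 u2 / dnorm2 u1 u2).

(* For sg = -1, the reflection exchanging K_2 with K_3 and C2 with C3. *)
Definition sflip (sg : R) (p : pt) : pt := (fst p, sg * snd p).

Ltac sqrt3_field := field_simplify; rewrite ?sqrt3_pow2; field.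

Lemma side_K1 p : side T2 T3 p * side T2 T3 T1 = - (9/2) * (fst p - 1/2).
Proof. unfold side, T1, T2, T3; cbn [fst snd]. sqrt3_field. Qed.

Lemma side_K2 p : side T1 T3 p * side T1 T3 T2 = - (9/4) * ell (fst p) (snd p).
Proof. unfold side, T1, T2, T3, ell; cbn [fst snd]. sqrt3_field. Qed.

Lemma side_K3 p : side T1 T2 p * side T1 T2 T3 = - (9/4) * ell (fst p) (- snd p).
Proof. unfold side, T1, T2, T3, ell; cbn [fst snd]. sqrt3_field. Qed.

Lemma sflip_involutive sg p : sg * sg = 1 -> sflip sg (sflip sg p) = p.
Proof.
  intros Hsg. destruct p as [p1 p2]. unfold sflip; cbn [fst snd].
  now rewrite <- Rmult_assoc, Hsg, Rmult_1_l.
Qed.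

Lemma side_sflip sg a b p :
  side (sflip sg a) (sflip sg b) (sflip sg p) = sg * side a b p.
Proof. unfold side, sflip; cbn. ring. Qed.

Lemma on_circle_sflip sg p : sg * sg = 1 -> on_circle (sflip sg p) <-> on_circle p.
Proof.
  intros Hsg. unfold on_circle, sflip; cbn [fst snd].
  replace ((sg * snd p) ^ 2) with (sg * sg * snd p ^ 2) by ring. now rewrite Hsg, Rmult_1_l.
Qed.

Lemma K2arc_iff p : K2arc p <-> on_circle p /\ 0 < ell (fst p) (snd p).
Proof. unfold K2arc, in_open_arc. rewrite side_K2. split; intros [Hc Hs]; split; auto; lra. Qed.

Lemma K3arc_iff p : K3arc p <-> on_circle p /\ 0 < ell (fst p) (- snd p).
Proof. unfold K3arc, in_open_arc. rewrite side_K3. split; intros [Hc Hs]; split; auto; lra. Qed.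

Lemma K1arc_fst p : K1arc p -> 1/2 < fst p.
Proof. unfold K1arc, in_open_arc. rewrite side_K1. intros [_ Hs]. lra. Qed.

Lemma ell_pos_on_circle u1 u2 : u1 ^ 2 + u2 ^ 2 = 1 -> 0 < ell u1 u2 ->
  u1 <= 1/2 /\ ell u1 (- u2) <= 0.
Proof.
  intros Hc Hl. unfold ell in *. pose proof sqrt3_sqr. pose proof sqrt3_bounds.
  assert (-1 <= u1) by nra. split; [|lra].
  destruct (Rle_or_lt u1 (1/2)); auto.
  assert (sqrt 3 * u2 < -3/2) by lra. assert (u2 < 0) by nra. nra.
Qed.

Section KasnerImage.
Variables u1 u2 : R.
Hypothesis Hu : u1 ^ 2 + u2 ^ 2 = 1.

Lemma dir_dot : u1 * dir1 u1 + u2 * dir2 u2 = - ell u1 u2.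
Proof. unfold dir1, dir2, ell. lra. Qed.

Lemma dnorm2_ell : dnorm2 u1 u2 = 3 - 2 * ell u1 u2.
Proof. unfold dnorm2, dir1, dir2, ell. pose proof sqrt3_pow2. nra. Qed.

Lemma ell_le_1 : ell u1 u2 <= 1.
Proof.
  unfold ell. pose proof sqrt3_sqr. pose proof sqrt3_bounds.
  assert (0 <= (sqrt 3 * u1 - u2) ^ 2) by apply pow2_ge_0.
  assert ((u1 + sqrt 3 * u2) ^ 2 <= 4) by nra. nra.
Qed.

Lemma dnorm2_ge_1 : 1 <= dnorm2 u1 u2.
Proof. rewrite dnorm2_ell. pose proof ell_le_1. lra. Qed.

Definition C2_line (mu : R) : pt := (u1 + mu * dir1 u1, u2 + mu * dir2 u2).

Lemma on_circle_C2_line mu :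
  on_circle (C2_line mu) <-> mu * (mu * dnorm2 u1 u2 - 2 * ell u1 u2) = 0.
Proof.
  unfold on_circle, C2_line; cbn [fst snd].
  replace ((u1 + mu * dir1 u1) ^ 2 + (u2 + mu * dir2 u2) ^ 2)
    with (u1 ^ 2 + u2 ^ 2 + 2 * mu * (u1 * dir1 u1 + u2 * dir2 u2) + mu * mu * dnorm2 u1 u2)
    by (unfold dnorm2; ring).
  rewrite Hu, dir_dot. split; intros; lra.
Qed.

Lemma on_line_C2 z :
  on_line (u1, u2) C2 z ->
  z = C2_line (((fst z - u1) * dir1 u1 + (snd z - u2) * dir2 u2) / dnorm2 u1 u2).
Proof.
  destruct z as [z1 z2]. unfold on_line, C2_line; cbn [fst snd]. intros Hs.
  assert (Hside : side (u1, u2) C2 (z1, z2) = dir2 u2 * (z1 - u1) - dir1 u1 * (z2 - u2))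
    by (unfold side, C2, dir1, dir2; cbn [fst snd]; ring).
  rewrite Hside in Hs. pose proof dnorm2_ge_1.
  f_equal; apply (Rmult_eq_reg_l (dnorm2 u1 u2)); try lra; field_simplify; try lra;
    unfold dnorm2; apply Rminus_diag_uniq.
  - transitivity (dir2 u2 * (dir2 u2 * (z1 - u1) - dir1 u1 * (z2 - u2))); [ring|].
    rewrite Hs; ring.
  - transitivity (- dir1 u1 * (dir2 u2 * (z1 - u1) - dir1 u1 * (z2 - u2))); [ring|].
    rewrite Hs; ring.
Qed.

Lemma on_line_C2_line mu : on_line (u1, u2) C2 (C2_line mu).
Proof. unfold on_line, side, C2, C2_line, dir1, dir2; cbn [fst snd]. ring. Qed.

Lemma C2_line_eq_0 mu : C2_line mu = (u1, u2) -> mu = 0.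
Proof.
  unfold C2_line. intros E. injection E as E1 E2. pose proof dnorm2_ge_1.
  unfold dnorm2 in *. destruct (Req_dec mu 0); auto.
  assert (dir1 u1 = 0) by (apply (Rmult_eq_reg_l mu); lra).
  assert (dir2 u2 = 0) by (apply (Rmult_eq_reg_l mu); lra). nra.
Qed.

Lemma kasner_image_C2_line : kasner_image u1 u2 = C2_line (2 * ell u1 u2 / dnorm2 u1 u2).
Proof.
  pose proof dnorm2_ge_1.
  replace (2 * ell u1 u2) with (3 - dnorm2 u1 u2) by (rewrite dnorm2_ell; ring).
  unfold kasner_image, C2_line, dir1, dir2 in *. f_equal; field; lra.
Qed.

Hypothesis Hl : 0 < ell u1 u2.

Lemma kasner_image_spec :
  on_circle (kasner_image u1 u2) /\ on_line (u1, u2) C2 (kasner_image u1 u2) /\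
  kasner_image u1 u2 <> (u1, u2).
Proof.
  pose proof dnorm2_ge_1. rewrite kasner_image_C2_line. repeat split.
  - apply on_circle_C2_line. field_simplify; lra.
  - apply on_line_C2_line.
  - intros E%C2_line_eq_0. assert (0 < 2 * ell u1 u2 / dnorm2 u1 u2); [|lra].
    apply Rdiv_lt_0_compat; lra.
Qed.

Lemma kasner_image_unique z :
  on_circle z -> on_line (u1, u2) C2 z -> z <> (u1, u2) -> z = kasner_image u1 u2.
Proof.
  intros Hz Hline Hne. pose proof dnorm2_ge_1.
  rewrite (on_line_C2 z Hline) in *. set (mu := _ / dnorm2 u1 u2) in *.
  apply on_circle_C2_line in Hz.
  assert (mu <> 0) by (intros E; apply Hne; rewrite E; unfold C2_line; f_equal; ring).
  rewrite kasner_image_C2_line. f_equal.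
  apply (Rmult_eq_reg_l (dnorm2 u1 u2)); [|lra].
  apply Rmult_integral in Hz as [|]; [contradiction|]. field_simplify; lra.
Qed.
End KasnerImage.

Lemma sflip_1 p : sflip 1 p = p.
Proof. destruct p. unfold sflip; cbn [fst snd]. now rewrite Rmult_1_l. Qed.

Lemma sflip_C3 : sflip (-1) C3 = C2.
Proof. unfold sflip, C2, C3; cbn [fst snd]. f_equal; ring. Qed.

Lemma sflip_C2 : sflip (-1) C2 = C3.
Proof. unfold sflip, C2, C3; cbn [fst snd]. f_equal; ring. Qed.

Ltac exclude_Taub E Hl :=
  unfold T1, T2, T3 in E; injection E as -> ->; unfold ell in Hl;
  pose proof sqrt3_sqr; lra.

Lemma kasner_map_K2 y :
  K2arc y -> forall z, kasner_map_rel y z <-> z = kasner_image (fst y) (snd y).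
Proof.
  intros HK. pose proof HK as [Hc Hl]%K2arc_iff.
  destruct y as [y1 y2]. unfold on_circle in Hc. cbn [fst snd] in *.
  destruct (ell_pos_on_circle y1 y2 Hc Hl) as [Hx Hl'].
  intros z; split.
  - intros [[E _]|[[E _]|[[E _]|[[H1 _]|[[_ (Hz & Hline & Hne)]|[H3 _]]]]]].
    1-3: exclude_Taub E Hl.
    + apply K1arc_fst in H1. cbn in H1. lra.
    + now apply kasner_image_unique.
    + apply K3arc_iff in H3 as [_ H3]. cbn in H3. lra.
  - intros ->. do 4 right; left. split; auto. now apply kasner_image_spec.
Qed.

Lemma kasner_map_K3 y :
  K3arc y -> forall z, kasner_map_rel y z <-> z = sflip (-1) (kasner_image (fst y) (- snd y)).
Proof.
  intros HK. pose proof HK as [Hc Hl]%K3arc_iff.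
  assert (Hflip : forall p, sflip (-1) p = (fst p, - snd p))
    by (intros []; unfold sflip; cbn [fst snd]; f_equal; ring).
  assert (Hc' : fst y ^ 2 + (- snd y) ^ 2 = 1) by (unfold on_circle in Hc; rewrite <- Hc; ring).
  destruct (ell_pos_on_circle _ _ Hc' Hl) as [Hx Hl'].
  rewrite Ropp_involutive in Hl'.
  intros z; split.
  - destruct y as [y1 y2]; cbn [fst snd] in *.
    intros [[E _]|[[E _]|[[E _]|[[H1 _]|[[H2 _]|[_ (Hz & Hline & Hne)]]]]]].
    1-3: exclude_Taub E Hl.
    + apply K1arc_fst in H1. cbn in H1. lra.
    + apply K2arc_iff in H2 as [_ H2]. cbn in H2. lra.
    + rewrite <- (sflip_involutive (-1) z) by ring. f_equal.
      apply kasner_image_unique; auto.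
      * now apply on_circle_sflip; [ring|].
      * unfold on_line in *. rewrite <- sflip_C3.
        replace (y1, - y2) with (sflip (-1) (y1, y2)) by auto.
        rewrite side_sflip, Hline. ring.
      * intros E. apply Hne. rewrite <- (sflip_involutive (-1) z), E, Hflip by ring.
        cbn [fst snd]. f_equal; ring.
  - intros ->. do 5 right. split; auto.
    destruct (kasner_image_spec (fst y) (- snd y) Hc' Hl) as (Hz & Hline & Hne).
    repeat split.
    + now apply on_circle_sflip; [ring|].
    + unfold on_line in *. rewrite <- sflip_C2.
      rewrite <- (sflip_involutive (-1) y) at 1 by ring.
      rewrite side_sflip, Hflip, Hline. ring.
    + intros E. apply Hne.
      now rewrite <- (sflip_involutive (-1) (kasner_image _ _)), E, Hflip by ring.
Qed.

Lemma kasner_map_K2_K3 y : K2arc y \/ K3arc y ->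
  exists sg, sg * sg = 1 /\ on_circle y /\ 0 < ell (fst y) (sg * snd y) /\
  forall z, kasner_map_rel y z <-> z = sflip sg (kasner_image (fst y) (sg * snd y)).
Proof.
  intros [HK|HK].
  - exists 1. replace (1 * snd y) with (snd y) by ring. rewrite sflip_1.
    pose proof HK as [Hc Hl]%K2arc_iff.
    refine (conj _ (conj Hc (conj Hl _))); [ring | now apply kasner_map_K2].
  - exists (-1). replace (-1 * snd y) with (- snd y) by ring.
    pose proof HK as [Hc Hl]%K3arc_iff.
    refine (conj _ (conj Hc (conj Hl _))); [ring | now apply kasner_map_K3].
Qed.

(** * The transition along a Bianchi II orbit *)

(* The equations in backward time t = - tau for s1 = Sigma_+, s2 = sg Sigma_-,
   mm = N_- + sg N_+, pp = N_- - sg N_+ and om = Omega, with k = 2 - q* and sg = 1 or -1. *)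
Section Transition.
Variables s1 s2 mm pp om : R -> R.
Variables k y1 y2 : R.

Definition qr t := 2 * (s1 t ^ 2 + s2 t ^ 2) + (2 - k) * om t.
Definition qgap t := 2 - qr t.

Hypothesis Hd1 : forall t, derivable_pt_lim s1 t (qgap t * s1 t + (mm t + pp t) ^ 2 / 2).
Hypothesis Hd2 : forall t,
  derivable_pt_lim s2 t (qgap t * s2 t + sqrt 3 * (mm t ^ 2 - pp t ^ 2) / 2).
Hypothesis HdM : forall t,
  derivable_pt_lim mm t (- (qr t + 2 * s1 t + 2 * sqrt 3 * s2 t) * mm t).
Hypothesis HdP : forall t,
  derivable_pt_lim pp t (- (qr t + 2 * s1 t - 2 * sqrt 3 * s2 t) * pp t).
Hypothesis HdO : forall t, derivable_pt_lim om t (- 2 * (qr t - (2 - k)) * om t).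
Hypothesis Hcon : forall t, om t + s1 t ^ 2 + s2 t ^ 2 + (mm t + pp t) ^ 2 / 4 = 1.
Hypothesis Hom : forall t, 0 <= om t.
Hypothesis HM : forall t, 0 < mm t.
Hypothesis HP : forall t, 0 < pp t.
Hypothesis Hk : 0 < k < 2.
Hypothesis Hy : y1 ^ 2 + y2 ^ 2 = 1.
Let l0 := ell y1 y2.
Hypothesis Hell : 0 < l0.

Let d1 := dir1 y1.
Let d2 := dir2 y2.
Let A0 := dnorm2 y1 y2.

(* Coordinates of s - C2 along and across d = y - C2; the Bianchi II orbit from y is the
   segment where across = 0, and it ends at K(y), where along = 3. *)
Definition along t := (s1 t + 1) * d1 + (s2 t + sqrt 3) * d2.
Definition across t := - (s1 t + 1) * d2 + (s2 t + sqrt 3) * d1.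
Definition slope t := across t / along t.
Definition W t := om t + pp t.
(* Half the decay rate of pp at y. *)
Definition P_rate := 1 + y1 - sqrt 3 * y2.

Definition f_along t :=
  k * om t * d1 + (sqrt 3 * k * om t + sqrt 3 * pp t * (mm t + pp t)) * d2.
Definition f_across t :=
  - k * om t * d2 + (sqrt 3 * k * om t + sqrt 3 * pp t * (mm t + pp t)) * d1.
Definition dslope t := (f_along t * slope t - f_across t) / along t.
Definition dW t :=
  - 2 * (qr t - (2 - k)) * om t - (qr t + 2 * s1 t - 2 * sqrt 3 * s2 t) * pp t.

Lemma A0_def : A0 = d1 ^ 2 + d2 ^ 2.
Proof. reflexivity. Qed.

Lemma A0_eq : A0 = 3 - 2 * l0.
Proof. exact (dnorm2_ell y1 y2 Hy). Qed.

Lemma A0_ge_1 : 1 <= A0.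
Proof. exact (dnorm2_ge_1 y1 y2 Hy). Qed.

Lemma y_bounds : Rabs y1 <= 1 /\ Rabs y2 <= 1.
Proof.
  pose proof (pow2_ge_0 y1). pose proof (pow2_ge_0 y2).
  split; apply Rabs_le_of_sqr_le; nra.
Qed.

Lemma frame_bounds : Rabs d1 <= 2 /\ Rabs d2 <= 2.8 /\ Rabs (y2 - sqrt 3 * y1) <= 2.8.
Proof.
  pose proof sqrt3_bounds. destruct y_bounds as [Hy1 Hy2].
  apply Rabs_le_between in Hy1, Hy2. unfold d1, d2, dir1, dir2.
  repeat split; apply Rabs_le; nra.
Qed.

Lemma dir_le_A0 : Rabs d1 <= A0 /\ Rabs d2 <= A0.
Proof.
  pose proof A0_ge_1. pose proof (pow2_ge_0 d1). pose proof (pow2_ge_0 d2).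
  rewrite A0_def in *. split; apply Rabs_le_of_sqr_le; nra.
Qed.

Lemma P_rate_pos : 0 < P_rate.
Proof.
  pose proof sqrt3_bounds. destruct y_bounds as [Hy1 _]. apply Rabs_le_between in Hy1.
  assert (Hl := Hell). unfold l0, ell, P_rate in *.
  assert (y2 < 0) by nra. nra.
Qed.

Lemma state_bounds t :
  s1 t ^ 2 + s2 t ^ 2 <= 1 /\ mm t + pp t <= 2 /\ Rabs (s1 t) <= 1 /\ Rabs (s2 t) <= 1.
Proof.
  pose proof (Hcon t). pose proof (Hom t). pose proof (HM t). pose proof (HP t).
  pose proof (pow2_ge_0 (s1 t)). pose proof (pow2_ge_0 (s2 t)).
  pose proof (pow2_ge_0 (mm t + pp t)).
  repeat split; try (apply Rabs_le_of_sqr_le; nra); [nra|].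
  destruct (Rle_or_lt (mm t + pp t) 2); auto. nra.
Qed.

Lemma W_nonneg t : 0 <= W t.
Proof. unfold W. pose proof (Hom t). pose proof (HP t). lra. Qed.

Lemma qgap_eq t : qgap t = k * om t + (mm t + pp t) ^ 2 / 2.
Proof. unfold qgap, qr. pose proof (Hcon t). nra. Qed.

Lemma qgap_bounds t : 0 <= qgap t <= 2.
Proof.
  rewrite qgap_eq. pose proof (Hom t). pose proof (pow2_ge_0 (mm t + pp t)).
  pose proof (Hcon t). pose proof (pow2_ge_0 (s1 t)). pose proof (pow2_ge_0 (s2 t)). nra.
Qed.

Lemma qgap_ge_defect t : k * (1 - s1 t ^ 2 - s2 t ^ 2) <= qgap t.
Proof.
  rewrite qgap_eq. pose proof (Hcon t). pose proof (Hom t).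
  pose proof (pow2_ge_0 (mm t + pp t)). nra.
Qed.

Lemma along_ge_half t : 1/2 <= along t.
Proof.
  destruct (state_bounds t) as [Hs _]. pose proof sqrt3_sqr. pose proof sqrt3_bounds.
  set (c := y1 + sqrt 3 * y2).
  assert (HA0 : d1 ^ 2 + d2 ^ 2 = 5 + 2 * c) by (unfold d1, d2, dir1, dir2, c; nra).
  assert (Hc : -2 <= c).
  { assert (0 <= (sqrt 3 * y1 - y2) ^ 2) by apply pow2_ge_0. unfold c. nra. }
  set (X := s1 t * d1 + s2 t * d2).
  assert (HX : X * X <= 5 + 2 * c).
  { assert (0 <= (s1 t * d2 - s2 t * d1) ^ 2) by apply pow2_ge_0.
    assert (X * X <= (s1 t ^ 2 + s2 t ^ 2) * (d1 ^ 2 + d2 ^ 2)) by (unfold X; nra). nra. }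
  replace (along t) with (X + c + 4) by (unfold along, X, c, d1, d2, dir1, dir2; nra).
  destruct (Rle_or_lt (- (3.5 + c)) X); [lra|]. nra.
Qed.

Lemma along_deriv t : derivable_pt_lim along t (qgap t * along t - f_along t).
Proof.
  eapply derivable_pt_lim_val; [|unfold along; derive_poly].
  unfold along, f_along. rewrite qgap_eq. field.
Qed.

Lemma across_deriv t : derivable_pt_lim across t (qgap t * across t - f_across t).
Proof.
  eapply derivable_pt_lim_val; [|unfold across; derive_poly].
  unfold across, f_across. rewrite qgap_eq. field.
Qed.

(* The qgap terms cancel: without forcing, along and across are rescaled by the same factor. *)
Lemma slope_deriv t : derivable_pt_lim slope t (dslope t).
Proof.
  pose proof (along_ge_half t).
  eapply derivable_pt_lim_val;
    [|apply (derivable_pt_lim_div across along); auto using across_deriv, along_deriv; lra].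
  unfold dslope, slope, Rsqr. field. lra.
Qed.

Lemma W_deriv t : derivable_pt_lim W t (dW t).
Proof. eapply derivable_pt_lim_val; [|unfold W; derive_poly]. unfold dW. ring. Qed.

Lemma along_cont t : continuity_pt along t.
Proof. exact (derivable_pt_lim_cont _ _ _ (along_deriv t)). Qed.

Lemma slope_cont t : continuity_pt slope t.
Proof. exact (derivable_pt_lim_cont _ _ _ (slope_deriv t)). Qed.

Lemma W_cont t : continuity_pt W t.
Proof. exact (derivable_pt_lim_cont _ _ _ (W_deriv t)). Qed.

Lemma forcing_bound t : Rabs (f_along t) <= 16 * W t /\ Rabs (f_across t) <= 16 * W t.
Proof.
  pose proof sqrt3_bounds. destruct (state_bounds t) as (_ & Hmp & _).
  pose proof (Hom t). pose proof (HM t). pose proof (HP t).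
  destruct frame_bounds as (Hx1 & Hx2 & _).
  pose proof (Rabs_pos d1). pose proof (Rabs_pos d2).
  set (e1 := k * om t). set (e2 := sqrt 3 * k * om t + sqrt 3 * pp t * (mm t + pp t)).
  assert (He1 : 0 <= e1 <= 2 * om t) by (unfold e1; nra).
  assert (He2 : 0 <= e2 <= 3.6 * om t + 3.6 * pp t).
  { assert (0 <= sqrt 3 * k <= 3.6) by nra.
    assert (0 <= sqrt 3 * (mm t + pp t) <= 3.6) by nra.
    unfold e2. nra. }
  unfold f_along, f_across, W. fold e1 e2.
  replace (- k * om t * d2) with (- (e1 * d2)) by (unfold e1; ring).
  split; (eapply Rle_trans; [apply Rabs_triang|]);
    rewrite ?Rabs_Ropp, !Rabs_mult, (Rabs_right e1), (Rabs_right e2) by lra; nra.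
Qed.

Lemma dslope_bound t : Rabs (slope t) <= 1 -> Rabs (dslope t) <= 64 * W t.
Proof.
  intros Hr. pose proof (along_ge_half t). destruct (forcing_bound t) as [H1 H2].
  unfold dslope, Rdiv. rewrite Rabs_mult, (Rabs_right (/ along t))
    by (apply Rle_ge, Rlt_le, Rinv_0_lt_compat; lra).
  assert (Hinv : 0 < / along t <= 2).
  { split; [apply Rinv_0_lt_compat; lra|].
    replace 2 with (/ (1/2)) by field. apply Rinv_le_contravar; lra. }
  assert (Rabs (f_along t * slope t - f_across t) <= 32 * W t).
  { eapply Rle_trans; [apply Rabs_triang|]. rewrite Rabs_Ropp, Rabs_mult.
    pose proof (Rabs_pos (slope t)). pose proof (Rabs_pos (f_along t)). nra. }
  pose proof (Rabs_pos (f_along t * slope t - f_across t)). nra.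
Qed.

Lemma dW_le t : dW t <= 6 * W t.
Proof.
  pose proof sqrt3_bounds. destruct (state_bounds t) as (_ & _ & Hs1 & Hs2).
  pose proof (Hom t). pose proof (HP t). pose proof (qgap_bounds t).
  apply Rabs_le_between in Hs1, Hs2.
  unfold dW, W. unfold qgap in *.
  assert (-2 * (qr t - (2 - k)) * om t <= 4 * om t) by nra.
  assert (- (qr t + 2 * s1 t - 2 * sqrt 3 * s2 t) <= 6) by nra.
  nra.
Qed.

(* A0 (s - C2) = along d + across d^perp, so s is determined by (along, across). *)
Lemma frame_dist t c :
  Rabs (s1 t - (-1 + c * d1 / A0)) <= Rabs (along t - c) + Rabs (across t) /\
  Rabs (s2 t - (- sqrt 3 + c * d2 / A0)) <= Rabs (along t - c) + Rabs (across t).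
Proof.
  pose proof A0_ge_1. destruct dir_le_A0 as [Hd1' Hd2'].
  assert (Key : forall x u v, Rabs u <= A0 -> Rabs v <= A0 ->
            A0 * x = (along t - c) * u + across t * v ->
            Rabs x <= Rabs (along t - c) + Rabs (across t)).
  { intros x u v Hu Hv Hx.
    apply (Rmult_le_reg_l A0); [lra|].
    rewrite <- (Rabs_right A0) at 1 by lra. rewrite <- Rabs_mult, Hx.
    eapply Rle_trans; [apply Rabs_triang|]. rewrite !Rabs_mult.
    pose proof (Rabs_pos (along t - c)). pose proof (Rabs_pos (across t)). nra. }
  split.
  - apply (Key _ d1 (- d2)); [auto | now rewrite Rabs_Ropp |].
    unfold along, across. rewrite A0_def in *. field. lra.
  - apply (Key _ d2 d1); auto.
    unfold along, across. rewrite A0_def in *. field. lra.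
Qed.

Lemma frame_origin : -1 + A0 * d1 / A0 = y1 /\ - sqrt 3 + A0 * d2 / A0 = y2.
Proof. pose proof A0_ge_1. unfold d1, d2, dir1, dir2. split; field; lra. Qed.

Lemma circle_defect t :
  A0 * (1 - s1 t ^ 2 - s2 t ^ 2) =
  2 * (along t - A0) * l0 - 2 * across t * (y2 - sqrt 3 * y1)
  - (along t - A0) ^ 2 - across t ^ 2.
Proof.
  pose proof A0_ge_1.
  set (e := along t - A0). set (b := across t).
  set (w1 := s1 t - y1). set (w2 := s2 t - y2).
  assert (E1 : A0 * w1 = e * d1 - b * d2)
    by (unfold w1, e, b, along, across; rewrite A0_def; unfold d1, d2, dir1, dir2; ring).
  assert (E2 : A0 * w2 = e * d2 + b * d1)
    by (unfold w2, e, b, along, across; rewrite A0_def; unfold d1, d2, dir1, dir2; ring).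
  assert (Hyw : A0 * (y1 * w1 + y2 * w2) = - e * l0 + b * (y2 - sqrt 3 * y1)).
  { transitivity (y1 * (A0 * w1) + y2 * (A0 * w2)); [ring|].
    rewrite E1, E2.
    transitivity (e * (y1 * d1 + y2 * d2) + b * (y2 * d1 - y1 * d2)); [ring|].
    replace (y1 * d1 + y2 * d2) with (- l0) by (unfold l0, ell, d1, d2, dir1, dir2; lra).
    unfold d1, d2, dir1, dir2. ring. }
  assert (Hww : A0 * (w1 ^ 2 + w2 ^ 2) = e ^ 2 + b ^ 2).
  { apply (Rmult_eq_reg_l A0); [|lra].
    transitivity ((A0 * w1) ^ 2 + (A0 * w2) ^ 2); [ring|].
    rewrite E1, E2, A0_def. ring. }
  replace (A0 * (1 - s1 t ^ 2 - s2 t ^ 2)) with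
    (A0 * (1 - y1 ^ 2 - y2 ^ 2) - 2 * (A0 * (y1 * w1 + y2 * w2)) - A0 * (w1 ^ 2 + w2 ^ 2))
    by (unfold w1, w2; ring).
  rewrite Hyw, Hww. replace (1 - y1 ^ 2 - y2 ^ 2) with 0 by lra. ring.
Qed.

Lemma across_bound t b0 : Rabs (slope t) <= b0 -> along t <= 3 -> Rabs (across t) <= 3 * b0.
Proof.
  intros Hr HA. pose proof (along_ge_half t).
  replace (across t) with (slope t * along t) by (unfold slope; field; lra).
  rewrite Rabs_mult, (Rabs_right (along t)) by lra.
  pose proof (Rabs_pos (slope t)). nra.
Qed.

Lemma near_kasner_point t eta1 b0 :
  0 <= eta1 -> 0 <= b0 -> along t <= A0 + eta1 -> A0 + eta1 <= 3 -> Rabs (slope t) <= b0 ->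
  Rabs (s1 t - y1) <= eta1 + 9 * b0 / l0 + 3 * b0 /\
  Rabs (s2 t - y2) <= eta1 + 9 * b0 / l0 + 3 * b0.
Proof.
  intros He1 Hb0 HA HA3 Hr.
  pose proof (across_bound t b0 Hr ltac:(lra)) as Hb.
  assert (Hq : b0 / l0 * l0 = b0) by (field; lra).
  assert (0 <= b0 / l0) by (apply Rdiv_le_0_compat; lra).
  assert (He : Rabs (along t - A0) <= eta1 + 9 * (b0 / l0)).
  { destruct (Rle_or_lt 0 (along t - A0)); [rewrite Rabs_right; lra|].
    rewrite Rabs_left by lra.
    pose proof (circle_defect t) as Hg. destruct (state_bounds t) as [Hs _].
    pose proof A0_ge_1. destruct frame_bounds as (_ & _ & Hyy).
    assert (0 <= A0 * (1 - s1 t ^ 2 - s2 t ^ 2)) by (apply Rmult_le_pos; lra).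
    assert (Habs : Rabs (across t * (y2 - sqrt 3 * y1)) <= 3 * b0 * 2.8)
      by (rewrite Rabs_mult; apply Rmult_le_compat; auto using Rabs_pos).
    apply Rabs_le_between in Habs.
    pose proof (pow2_ge_0 (along t - A0)). pose proof (pow2_ge_0 (across t)).
    assert (- (along t - A0) * l0 <= 8.4 * (b0 / l0) * l0) by lra.
    nra. }
  destruct (frame_dist t A0) as [D1 D2]. rewrite (proj1 frame_origin) in D1.
  rewrite (proj2 frame_origin) in D2. unfold Rdiv in *. split; lra.
Qed.

Lemma rates_near_kasner_point t dl :
  Rabs (s1 t - y1) <= dl -> Rabs (s2 t - y2) <= dl -> 0 <= dl ->
  16 * dl <= k -> 14 * dl <= P_rate -> 6 * dl <= l0 ->
  dW t <= - k * om t - P_rate * pp t /\ l0 <= - (qr t + 2 * s1 t + 2 * sqrt 3 * s2 t).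
Proof.
  intros H1 H2 Hd Hk1 Hm1 Hl1.
  apply Rabs_le_between in H1, H2.
  destruct y_bounds as [Hy1 Hy2]. apply Rabs_le_between in Hy1, Hy2.
  pose proof sqrt3_bounds. pose proof (Hom t). pose proof (HP t). pose proof (qgap_bounds t).
  assert (Hg : qgap t <= 8 * dl).
  { unfold qgap, qr.
    set (w1 := s1 t - y1) in *. set (w2 := s2 t - y2) in *.
    replace (s1 t) with (y1 + w1) by (unfold w1; ring).
    replace (s2 t) with (y2 + w2) by (unfold w2; ring).
    pose proof (pow2_ge_0 w1). pose proof (pow2_ge_0 w2).
    assert (y1 * w1 >= - dl) by nra. assert (y2 * w2 >= - dl) by nra.
    assert (0 <= (2 - k) * om t) by nra. nra. }
  unfold dW, qgap, P_rate, l0, ell in *. split.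
  - assert (-2 * (qr t - (2 - k)) * om t <= - k * om t) by nra.
    assert (- (qr t + 2 * s1 t - 2 * sqrt 3 * s2 t) <= - (1 + y1 - sqrt 3 * y2)) by nra.
    nra.
  - nra.
Qed.

Lemma escape_time a b :
  a <= b -> mm a * exp (l0 * (b - a)) <= mm b -> b - a <= ln (2 / mm a) / l0.
Proof.
  intros Hab Hg. pose proof (HM a). pose proof (HP b).
  destruct (state_bounds b) as (_ & Hm2 & _).
  assert (Hex : exp (l0 * (b - a)) <= 2 / mm a).
  { apply (Rmult_le_reg_l (mm a)); auto.
    replace (mm a * (2 / mm a)) with 2 by (field; lra). lra. }
  apply Rle_div_r; [lra|]. rewrite Rmult_comm, <- (ln_exp (l0 * (b - a))).
  apply ln_le; [apply exp_pos | exact Hex].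
Qed.

Lemma escape_phase a b eta1 b0 c1 :
  0 <= eta1 -> 0 <= b0 <= 1 -> A0 + eta1 <= 3 ->
  16 * (eta1 + 9 * b0 / l0 + 3 * b0) <= k ->
  14 * (eta1 + 9 * b0 / l0 + 3 * b0) <= P_rate ->
  6 * (eta1 + 9 * b0 / l0 + 3 * b0) <= l0 ->
  0 < c1 <= k -> c1 <= P_rate -> a <= b ->
  (forall t, a <= t <= b -> along t <= A0 + eta1 /\ Rabs (slope t) <= b0) ->
  W b <= W a /\ Rabs (slope b) <= Rabs (slope a) + (64 / c1) * W a /\
  b - a <= ln (2 / mm a) / l0.
Proof.
  intros He Hb0 HA3 C1 C2 C3 Hc1 Hc1m Hab Hreg.
  assert (Hq : 0 <= 9 * b0 / l0) by (apply Rdiv_le_0_compat; lra).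
  assert (Hrates : forall t, a <= t <= b ->
     dW t <= - k * om t - P_rate * pp t /\ l0 <= - (qr t + 2 * s1 t + 2 * sqrt 3 * s2 t)).
  { intros t Ht. destruct (Hreg t Ht) as [HA Hr].
    destruct (near_kasner_point t eta1 b0) as [R1 R2]; try lra.
    apply (rates_near_kasner_point t _ R1 R2); lra. }
  assert (HWd : forall t, a <= t <= b -> dW t <= - c1 * W t).
  { intros t Ht. destruct (Hrates t Ht) as [H _]. unfold W.
    pose proof (Hom t). pose proof (HP t). nra. }
  assert (Hc64 : 0 < 64 / c1) by (apply Rdiv_lt_0_compat; lra).
  split; [|split].
  - apply (nonpos_derivative_decreasing W dW); auto using W_deriv.
    intros t Ht. specialize (HWd t Ht). pose proof (W_nonneg t). nra.
  - pose proof (W_nonneg b).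
    enough (Rabs (slope b) <= Rabs (slope a) + (- (64 / c1) * W b - - (64 / c1) * W a)) by nra.
    apply (Rabs_deriv_dominated slope dslope (fun t => - (64 / c1) * W t)
             (fun t => - (64 / c1) * dW t));
      auto using slope_deriv.
    + intros t Ht. apply derivable_pt_lim_scal, W_deriv.
    + intros t Ht. destruct (Hreg t Ht) as [_ Hr].
      pose proof (dslope_bound t ltac:(lra)). specialize (HWd t Ht).
      replace (- (64 / c1) * dW t) with (64 * (- dW t / c1)) by (field; lra).
      assert (W t <= - dW t / c1) by (apply Rle_div_r; lra). lra.
  - apply escape_time; auto.
    apply (gronwall_lower mm (fun t => - (qr t + 2 * s1 t + 2 * sqrt 3 * s2 t) * mm t)); auto.
    intros t Ht. destruct (Hrates t Ht) as [_ H]. pose proof (HM t). nra.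
Qed.

(* Away from both ends of the transition, the orbit is strictly inside the circle, so q < 2. *)
Lemma qgap_lower_bound t eta1 eta b0 :
  0 < eta1 -> 0 < eta -> 0 <= b0 <= 1 -> b0 <= eta1 * eta / 240 ->
  A0 + eta1 / 2 <= along t -> along t <= 3 - eta -> Rabs (slope t) <= b0 ->
  k * (eta1 * eta / 12) <= qgap t.
Proof.
  intros He1 He Hb0 Hb0e HAl HAu Hr.
  pose proof (across_bound t b0 Hr ltac:(lra)) as Hb.
  pose proof A0_eq. pose proof A0_ge_1. destruct frame_bounds as (_ & _ & Hyy).
  assert (Habs : Rabs (across t * (y2 - sqrt 3 * y1)) <= 3 * b0 * 2.8)
    by (rewrite Rabs_mult; apply Rmult_le_compat; auto using Rabs_pos).
  apply Rabs_le_between in Habs.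
  assert (Hb2 : across t ^ 2 <= 9 * b0) by (pose proof (pow_maj_Rabs _ _ 2 Hb); nra).
  assert (Hprod : eta1 / 2 * eta <= (along t - A0) * (2 * l0 - (along t - A0)))
    by (apply Rmult_le_compat; lra).
  assert (Hnum : eta1 * eta / 4 <= A0 * (1 - s1 t ^ 2 - s2 t ^ 2)).
  { rewrite circle_defect. nra. }
  assert (HS : eta1 * eta / 12 <= 1 - s1 t ^ 2 - s2 t ^ 2).
  { assert (0 < eta1 * eta) by nra. nra. }
  pose proof (qgap_ge_defect t). nra.
Qed.

Lemma transit_speed a b eta1 eta b0 eE :
  0 < eta1 -> 0 < eta -> 0 <= b0 <= 1 -> b0 <= eta1 * eta / 240 ->
  16 * eE <= k * (eta1 * eta / 12) / 4 -> a <= b -> A0 + eta1 <= along a ->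
  (forall t, a <= t <= b -> along t <= 3 - eta /\ Rabs (slope t) <= b0 /\ W t <= eE) ->
  along a + k * (eta1 * eta / 12) / 4 * (b - a) <= along b.
Proof.
  intros He1 He Hb0 Hb0e HeE Hab HAa Hreg.
  set (v := k * (eta1 * eta / 12) / 4) in *.
  assert (Hv : 0 < v) by (unfold v; assert (0 < eta1 * eta) by nra; nra).
  assert (Hspeed : forall t, a <= t <= b -> A0 + eta1 / 2 <= along t ->
                   v <= qgap t * along t - f_along t).
  { intros t Ht HA. destruct (Hreg t Ht) as (H1 & H2 & H3).
    pose proof (qgap_lower_bound t eta1 eta b0 He1 He Hb0 Hb0e HA H1 H2) as Hg.
    pose proof (along_ge_half t). destruct (forcing_bound t) as [HE _].
    apply Rabs_le_between in HE.
    assert (4 * v * (1/2) <= qgap t * along t) by (unfold v in *; nra). lra. }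
  assert (Hlow : forall t, a <= t <= b -> A0 + eta1 / 2 <= along t).
  { apply (stays_above along (fun t => qgap t * along t - f_along t));
      auto using along_cont, along_deriv; [lra|].
    intros t Ht HA. specialize (Hspeed t Ht HA). lra. }
  enough (along a - v * a <= along b - v * b) by lra.
  apply (nonneg_derivative_increasing (fun t => along t - v * t)
           (fun t => qgap t * along t - f_along t - v)); auto.
  - intros t Ht. eapply derivable_pt_lim_val;
      [|apply derivable_pt_lim_minus; [apply along_deriv | derive_poly]].
    unfold v. field.
  - intros t Ht. specialize (Hspeed t Ht (Hlow t Ht)). lra.
Qed.

Lemma transit_phase a b eta1 eta b0 eE :
  0 < eta1 -> 0 < eta -> 0 <= b0 <= 1 -> b0 <= eta1 * eta / 240 ->
  16 * eE <= k * (eta1 * eta / 12) / 4 ->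
  a <= b -> A0 + eta1 <= along a ->
  (forall t, a <= t <= b -> along t <= 3 - eta /\ Rabs (slope t) <= b0 /\ W t <= eE) ->
  (b - a) * (k * (eta1 * eta / 12) / 4) <= 3 /\
  W b <= W a * exp (6 * (b - a)) /\
  Rabs (slope b) <= Rabs (slope a) + 64 * (W a * exp (6 * (b - a))) * (b - a).
Proof.
  intros He1 He Hb0 Hb0e HeE Hab HAa Hreg.
  pose proof (transit_speed a b eta1 eta b0 eE He1 He Hb0 Hb0e HeE Hab HAa Hreg).
  assert (HWt : forall t, a <= t <= b -> W t <= W a * exp (6 * (t - a)))
    by (intros t Ht; apply (gronwall_upper W dW); auto using W_deriv, dW_le; lra).
  split; [|split; [apply HWt; lra|]].
  { destruct (Hreg b ltac:(lra)) as [HAb _]. pose proof (along_ge_half a). nra. }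
  set (X := W a * exp (6 * (b - a))).
  assert (HX : forall t, a <= t <= b -> W t <= X).
  { intros t Ht. eapply Rle_trans; [apply HWt; auto|]. unfold X.
    apply Rmult_le_compat_l; [apply W_nonneg|].
    destruct (Req_dec t b) as [->|]; [lra|]. apply Rlt_le, exp_increasing. lra. }
  replace (64 * X * (b - a)) with (64 * X * b - 64 * X * a) by ring.
  apply (Rabs_deriv_dominated slope dslope (fun t => 64 * X * t) (fun _ => 64 * X));
    auto using slope_deriv.
  - intros t Ht. eapply derivable_pt_lim_val; [|derive_poly]. unfold X. field.
  - intros t Ht. destruct (Hreg t Ht) as (_ & Hr & _).
    pose proof (dslope_bound t ltac:(lra)). specialize (HX t Ht). lra.
Qed.

(* Starting with along < A0 + eta1, |slope| <= b0/4 and W <= e0, the orbit keeps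
   |slope| <= b0 and W <= eE until along = 3 - eta: near y (escape phase) W decays at
   rate c1, afterwards (transit phase) along grows at speed >= v for a time <= Tv. *)
Section Bootstrap.
Variables eta1 eta b0 c1 e0 : R.
Let delta := eta1 + 9 * b0 / l0 + 3 * b0.
Let v := k * (eta1 * eta / 12) / 4.
Let eE := v / 16.
Let Tv := 3 / v.
Hypothesis Heta1 : 0 < eta1.
Hypothesis Heta : 0 < eta.
Hypothesis Hb0 : 0 < b0 <= 1.
Hypothesis Hb0_eta : b0 <= eta1 * eta / 240.
Hypothesis HA0_eta : A0 + eta1 <= 3 - eta.
Hypothesis Hdelta : 16 * delta <= k /\ 14 * delta <= P_rate /\ 6 * delta <= l0.
Hypothesis Hc1 : 0 < c1 <= k /\ c1 <= P_rate.
Hypothesis He0_escape : 64 / c1 * e0 <= b0 / 4.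
Hypothesis He0_W : e0 * exp (6 * Tv) <= eE / 2.
Hypothesis He0_slope : 64 * (e0 * exp (6 * Tv)) * Tv <= b0 / 4.

Lemma v_pos : 0 < v.
Proof. unfold v. assert (0 < eta1 * eta) by nra. nra. Qed.

Lemma Tv_pos : 0 < Tv.
Proof. unfold Tv. pose proof v_pos. apply Rdiv_lt_0_compat; lra. Qed.

Lemma exp_6Tv_ge_1 : 1 <= exp (6 * Tv).
Proof. pose proof Tv_pos. pose proof (exp_ineq1_le (6 * Tv)). lra. Qed.

Lemma escape_then_transit t0 t1 T :
  t0 <= t1 <= T -> along t1 = A0 + eta1 -> W t1 <= e0 -> Rabs (slope t1) <= b0 / 2 ->
  (forall t, t1 <= t <= T -> along t <= 3 - eta /\ Rabs (slope t) <= b0 /\ W t <= eE) ->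
  Rabs (slope T) <= 3 * b0 / 4 /\ W T <= eE / 2 /\ T - t1 <= Tv.
Proof.
  intros Ht1 HA1 HW1 Hr1 Hreg.
  pose proof v_pos. pose proof Tv_pos. pose proof (W_nonneg t1).
  assert (HeE : eE = v / 16) by reflexivity.
  destruct (transit_phase t1 T eta1 eta b0 eE Heta1 Heta ltac:(lra) Hb0_eta
              ltac:(unfold v in HeE; lra) ltac:(lra) ltac:(lra) Hreg) as (Q1 & Q2 & Q3).
  assert (HTt1 : T - t1 <= Tv)
    by (unfold Tv; apply Rle_div_r; [lra|]; replace v with (k * (eta1 * eta / 12) / 4); auto).
  assert (Hexp : exp (6 * (T - t1)) <= exp (6 * Tv)).
  { destruct (Req_dec (T - t1) Tv) as [->|]; [lra|]. apply Rlt_le, exp_increasing. lra. }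
  assert (HWexp : W t1 * exp (6 * (T - t1)) <= e0 * exp (6 * Tv))
    by (apply Rmult_le_compat; auto using Rlt_le, exp_pos).
  assert (64 * (W t1 * exp (6 * (T - t1))) * (T - t1) <= 64 * (e0 * exp (6 * Tv)) * Tv).
  { apply Rmult_le_compat; try lra.
    pose proof (exp_pos (6 * (T - t1))). nra. }
  repeat split; lra.
Qed.

Lemma transit_control t0 T :
  along t0 < A0 + eta1 -> Rabs (slope t0) <= b0 / 4 -> W t0 <= e0 -> t0 <= T ->
  (forall t, t0 <= t <= T -> along t <= 3 - eta /\ Rabs (slope t) <= b0 /\ W t <= eE) ->
  Rabs (slope T) <= 3 * b0 / 4 /\ W T <= eE / 2 /\ T - t0 <= ln (2 / mm t0) / l0 + Tv.
Proof.
  intros HA0 Hr0 HW0 HtT Hreg.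
  pose proof Tv_pos. pose proof exp_6Tv_ge_1. pose proof (W_nonneg t0).
  assert (Hescape : forall t1, t0 <= t1 <= T ->
            (forall t, t0 <= t <= t1 -> along t <= A0 + eta1) ->
            W t1 <= W t0 /\ Rabs (slope t1) <= b0 / 2 /\ t1 - t0 <= ln (2 / mm t0) / l0).
  { intros t1 Ht1 Hnear.
    assert (Hreg' : forall t, t0 <= t <= t1 -> along t <= A0 + eta1 /\ Rabs (slope t) <= b0).
    { intros t Ht. split; [now apply Hnear|]. apply Hreg. lra. }
    destruct Hdelta as (D1 & D2 & D3).
    destruct (escape_phase t0 t1 eta1 b0 c1 ltac:(lra) ltac:(lra) ltac:(lra) D1 D2 D3
                ltac:(lra) ltac:(lra) ltac:(lra) Hreg') as (P1 & P2 & P3).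
    assert (64 / c1 * W t0 <= 64 / c1 * e0)
      by (apply Rmult_le_compat_l; [apply Rlt_le, Rdiv_lt_0_compat|]; lra).
    repeat split; lra. }
  destruct (classic (exists s, t0 <= s <= T /\ A0 + eta1 <= along s)) as [[s [Hs HAs]]|Hno].
  - destruct (first_zero_crossing (fun t => along t - (A0 + eta1)) t0 s) as (t1 & Ht1 & Hz & Hb);
      cbv beta in *; try lra.
    { intros t. apply continuity_pt_minus; [apply along_cont | apply continuity_pt_cst]. }
    { destruct (Req_dec t0 s) as [<-|]; lra. }
    destruct (Hescape t1) as (E1 & E2 & E3); [lra|..].
    { intros t Ht. destruct (Req_dec t t1) as [->|]; [lra|]. specialize (Hb t ltac:(lra)). lra. }
    destruct (escape_then_transit t0 t1 T) as (F1 & F2 & F3); try lra.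
    intros t Ht. apply Hreg. lra.
  - destruct (Hescape T) as (E1 & E2 & E3); [lra| |].
    + intros t Ht. apply Rnot_lt_le. intros ?. apply Hno. exists t. split; lra.
    + unfold eE in *. repeat split; nra.
Qed.

Lemma transit_reaches_end t0 :
  along t0 < A0 + eta1 -> Rabs (slope t0) <= b0 / 4 -> W t0 <= e0 ->
  exists ts, t0 <= ts /\ along ts = 3 - eta /\ Rabs (slope ts) <= b0.
Proof.
  intros HA0 Hr0 HW0.
  pose proof Tv_pos. pose proof exp_6Tv_ge_1. pose proof v_pos.
  assert (HeE : eE = v / 16) by reflexivity.
  set (T := t0 + (ln (2 / mm t0) / l0 + Tv) + 1).
  assert (Hln : 0 <= ln (2 / mm t0) / l0).
  { destruct (state_bounds t0) as (_ & Hm2 & _). pose proof (HP t0). pose proof (HM t0).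
    apply Rdiv_le_0_compat; [|lra].
    rewrite <- ln_1. apply ln_le; [lra|].
    apply Rle_div_r; lra. }
  assert (C1 : forall t, continuity_pt (fun t => along t - (3 - eta)) t)
    by (intros t; apply continuity_pt_minus; [apply along_cont | apply continuity_pt_cst]).
  assert (C2 : forall t, continuity_pt (fun t => Rabs (slope t) - b0) t).
  { intros t. apply continuity_pt_minus; [|apply continuity_pt_cst].
    apply (continuity_pt_comp slope Rabs); [apply slope_cont | apply Rcontinuity_abs]. }
  assert (C3 : forall t, continuity_pt (fun t => W t - eE) t)
    by (intros t; apply continuity_pt_minus; [apply W_cont | apply continuity_pt_cst]).
  destruct (first_exit _ _ _ t0 T C1 C2 C3) as [Hin | (ts & Hts & Hreg & Hexit)];
    cbv beta in *; try (unfold T; nra).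
  - assert (Hreg : forall t, t0 <= t <= T ->
              along t <= 3 - eta /\ Rabs (slope t) <= b0 /\ W t <= eE)
      by (intros t Ht; specialize (Hin t Ht); lra).
    destruct (transit_control t0 T HA0 Hr0 HW0 ltac:(unfold T; lra) Hreg) as (_ & _ & Hdur).
    unfold T in Hdur. lra.
  - assert (Hreg' : forall t, t0 <= t <= ts ->
              along t <= 3 - eta /\ Rabs (slope t) <= b0 /\ W t <= eE)
      by (intros t Ht; specialize (Hreg t Ht); lra).
    destruct (transit_control t0 ts HA0 Hr0 HW0 ltac:(lra) Hreg') as (Hr & Hw & _).
    exists ts. repeat split; lra.
Qed.
End Bootstrap.

Lemma near_kasner_image t eta b0 :
  along t = 3 - eta -> Rabs (slope t) <= b0 -> 0 <= eta ->
  Rabs (s1 t - fst (kasner_image y1 y2)) <= eta + 3 * b0 /\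
  Rabs (s2 t - snd (kasner_image y1 y2)) <= eta + 3 * b0.
Proof.
  intros HA Hr He.
  pose proof (across_bound t b0 Hr ltac:(lra)).
  change (fst (kasner_image y1 y2)) with (-1 + 3 * d1 / A0).
  change (snd (kasner_image y1 y2)) with (- sqrt 3 + 3 * d2 / A0).
  assert (Rabs (along t - 3) = eta).
  { rewrite HA. replace (3 - eta - 3) with (- eta) by ring.
    rewrite Rabs_Ropp. apply Rabs_right. lra. }
  destruct (frame_dist t 3) as [D1 D2]. split; lra.
Qed.

Lemma start_estimate t dl :
  Rabs (s1 t - y1) < dl -> Rabs (s2 t - y2) < dl ->
  Rabs (along t - A0) <= 5.6 * dl /\ Rabs (slope t) <= 11.2 * dl.
Proof.
  intros N1 N2. destruct frame_bounds as (Hx1 & Hx2 & _).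
  assert (Hprod : forall u w, Rabs u < dl -> Rabs w <= 2.8 -> Rabs (u * w) <= 2.8 * dl).
  { intros u w Hu Hw. rewrite Rabs_mult, (Rmult_comm 2.8).
    apply Rmult_le_compat; auto using Rabs_pos; lra. }
  assert (HA : Rabs (along t - A0) <= 5.6 * dl).
  { replace (along t - A0) with ((s1 t - y1) * d1 + (s2 t - y2) * d2)
      by (unfold along; rewrite A0_def; unfold d1, d2, dir1, dir2; ring).
    eapply Rle_trans; [apply Rabs_triang|].
    pose proof (Hprod _ d1 N1 ltac:(lra)). pose proof (Hprod _ d2 N2 Hx2). lra. }
  assert (HB : Rabs (across t) <= 5.6 * dl).
  { replace (across t) with ((s1 t - y1) * (- d2) + (s2 t - y2) * d1)
      by (unfold across, d1, d2, dir1, dir2; ring).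
    eapply Rle_trans; [apply Rabs_triang|].
    pose proof (Hprod _ (- d2) N1 ltac:(rewrite Rabs_Ropp; lra)).
    pose proof (Hprod _ d1 N2 ltac:(lra)). lra. }
  split; [exact HA|].
  pose proof (along_ge_half t).
  unfold slope, Rdiv. rewrite Rabs_mult, Rabs_inv, (Rabs_right (along t)) by lra.
  assert (/ along t <= 2) by (replace 2 with (/ (1/2)) by field; apply Rinv_le_contravar; lra).
  assert (0 < / along t) by (apply Rinv_0_lt_compat; lra).
  pose proof (Rabs_pos (across t)). nra.
Qed.

Lemma transition_parameters eps : 0 < eps ->
  exists eta eta1 b0, 0 < eta /\ 0 < eta1 /\ 0 < b0 <= 1 /\ b0 <= eta1 * eta / 240 /\
    A0 + eta1 <= 3 - eta /\
    (16 * (eta1 + 9 * b0 / l0 + 3 * b0) <= k /\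
     14 * (eta1 + 9 * b0 / l0 + 3 * b0) <= P_rate /\
     6 * (eta1 + 9 * b0 / l0 + 3 * b0) <= l0) /\
    eta + 3 * b0 <= eps.
Proof.
  intros Heps.
  assert (l0 <= 1) by exact (ell_le_1 y1 y2 Hy). pose proof P_rate_pos. pose proof A0_eq.
  destruct (Rmin_spec eps l0) as (Hm & Hm1 & Hm2); auto.
  destruct (Rmin_spec P_rate l0) as (Hn & Hn1 & Hn2); auto.
  destruct (Rmin_spec k (Rmin P_rate l0)) as (Hp & Hp1 & Hp2); [lra|auto|].
  set (eta := Rmin eps l0 / 4). set (eta1 := Rmin k (Rmin P_rate l0) / 20).
  assert (Hee : 0 < eta1 * eta) by (unfold eta1, eta; nra).
  exists eta, eta1, (eta1 * eta * l0 / 240).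
  assert (Hb0q : 9 * (eta1 * eta * l0 / 240) / l0 = 9 * eta1 * eta / 240) by (field; lra).
  rewrite Hb0q. unfold eta1, eta in *. repeat split; nra.
Qed.

Lemma small_initial_W b0 c1 v : 0 < b0 -> 0 < c1 -> 0 < v ->
  exists e0, 0 < e0 /\ 64 / c1 * e0 <= b0 / 4 /\
    e0 * exp (6 * (3 / v)) <= v / 16 / 2 /\
    64 * (e0 * exp (6 * (3 / v))) * (3 / v) <= b0 / 4.
Proof.
  intros Hb0 Hc1 Hv.
  set (Tv := 3 / v). assert (HTv : 0 < Tv) by (apply Rdiv_lt_0_compat; lra).
  set (E6 := exp (6 * Tv)). assert (HE6 : 0 < E6) by apply exp_pos.
  assert (Hx : 0 < b0 * c1 / 256 /\ 0 < v / 16 / 2 / E6 /\ 0 < b0 / (256 * E6 * Tv)).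
  { repeat split; repeat apply Rdiv_lt_0_compat; repeat apply Rmult_lt_0_compat;
      try apply Rinv_0_lt_compat; lra. }
  destruct (Rmin_spec (v / 16 / 2 / E6) (b0 / (256 * E6 * Tv))) as (He1 & He2 & He3); try lra.
  destruct (Rmin_spec (b0 * c1 / 256) (Rmin (v / 16 / 2 / E6) (b0 / (256 * E6 * Tv))))
    as (He4 & He5 & He6); try lra.
  exists (Rmin (b0 * c1 / 256) (Rmin (v / 16 / 2 / E6) (b0 / (256 * E6 * Tv)))).
  set (e0 := Rmin _ _) in *. repeat split; auto.
  - apply (Rle_trans _ (64 / c1 * (b0 * c1 / 256))); [|apply Req_le; field; lra].
    apply Rmult_le_compat_l; [apply Rlt_le, Rdiv_lt_0_compat|]; lra.
  - apply (Rle_trans _ (v / 16 / 2 / E6 * E6)); [|apply Req_le; field; lra].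
    apply Rmult_le_compat_r; lra.
  - apply (Rle_trans _ (64 * (b0 / (256 * E6 * Tv) * E6) * Tv)); [|apply Req_le; field; lra].
    apply Rmult_le_compat_r; [lra|]. apply Rmult_le_compat_l; [lra|].
    apply Rmult_le_compat_r; lra.
Qed.

Lemma approaches_kasner_image :
  (forall dl T, 0 < dl -> exists t0, T <= t0 /\ Rabs (s1 t0 - y1) < dl /\
      Rabs (s2 t0 - y2) < dl /\ om t0 < dl /\ pp t0 < dl) ->
  forall eps T, 0 < eps -> exists ts, T <= ts /\
    Rabs (s1 ts - fst (kasner_image y1 y2)) <= eps /\
    Rabs (s2 ts - snd (kasner_image y1 y2)) <= eps.
Proof.
  intros Hnear eps T Heps.
  destruct (transition_parameters eps Heps)
    as (eta & eta1 & b0 & Heta & Heta1 & Hb0 & Hb0e & HA0e & Hdelta & Hfinal).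
  destruct (Rmin_spec k P_rate) as (Hc1 & Hc1k & Hc1p); [lra | apply P_rate_pos |].
  destruct (small_initial_W b0 (Rmin k P_rate) (k * (eta1 * eta / 12) / 4))
    as (e0 & He0 & He0_escape & He0_W & He0_slope); [lra | lra | nra |].
  destruct (Rmin_spec (eta1 / 10) (b0 / 80)) as (Hd1' & Hd2' & Hd3'); try lra.
  destruct (Rmin_spec (Rmin (eta1 / 10) (b0 / 80)) (e0 / 4)) as (Hd4 & Hd5 & Hd6); try lra.
  set (dl0 := Rmin (Rmin (eta1 / 10) (b0 / 80)) (e0 / 4)) in *.
  destruct (Hnear dl0 T Hd4) as (t0 & Ht0 & N1 & N2 & N3 & N4).
  destruct (start_estimate t0 dl0 N1 N2) as [HA1 Hr0]. apply Rabs_le_between in HA1.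
  destruct (transit_reaches_end eta1 eta b0 (Rmin k P_rate) e0 Heta1 Heta Hb0 Hb0e HA0e
              Hdelta ltac:(lra) He0_escape He0_W He0_slope t0 ltac:(lra) ltac:(lra)
              ltac:(unfold W; lra)) as (ts & Hts & HAs & Hrs).
  exists ts. split; [lra|].
  destruct (near_kasner_image ts eta b0 HAs Hrs ltac:(lra)) as [Z1 Z2]. split; lra.
Qed.
End Transition.

Lemma Un_cv_rate (u : nat -> R) l :
  (forall n, Rabs (u n - l) <= / (INR n + 1)) -> Un_cv u l.
Proof.
  intros H eps Heps. destruct (INR_archimed eps 1 Heps) as [N HN].
  exists N. intros n Hn. unfold R_dist.
  eapply Rle_lt_trans; [apply H|].
  assert (INR N <= INR n) by (apply le_INR; lia).
  assert (Hpos : 0 < INR n + 1) by (pose proof (pos_INR n); lra).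
  apply (Rmult_lt_reg_l (INR n + 1)); auto.
  rewrite Rinv_r by lra. nra.
Qed.

Section Backward.
Variables (gamma : R) (phi : R -> state).
Hypothesis Hsol : is_solution gamma phi.
Hypothesis H0 : in_B1plus (phi 0).
Variable sg : R.
Hypothesis Hsg : sg * sg = 1.

Definition back_s1 t := Sp (phi (- t)).
Definition back_s2 t := sg * Sm (phi (- t)).
Definition back_M t := Nm (phi (- t)) + sg * Np (phi (- t)).
Definition back_P t := Nm (phi (- t)) - sg * Np (phi (- t)).
Definition back_Om t := Om (phi (- t)).
Let k := 2 - qstar gamma.

Lemma back_q t : qr back_s1 back_s2 back_Om k t = qfun gamma (phi (- t)).
Proof.
  unfold qr, qfun, back_s1, back_s2, back_Om, k.
  destruct (sign_cases sg Hsg) as [-> | ->]; ring.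
Qed.

Lemma back_equations :
  (forall t, derivable_pt_lim back_s1 t
     (qgap back_s1 back_s2 back_Om k t * back_s1 t + (back_M t + back_P t) ^ 2 / 2)) /\
  (forall t, derivable_pt_lim back_s2 t
     (qgap back_s1 back_s2 back_Om k t * back_s2 t
      + sqrt 3 * (back_M t ^ 2 - back_P t ^ 2) / 2)) /\
  (forall t, derivable_pt_lim back_M t
     (- (qr back_s1 back_s2 back_Om k t + 2 * back_s1 t + 2 * sqrt 3 * back_s2 t) * back_M t)) /\
  (forall t, derivable_pt_lim back_P t
     (- (qr back_s1 back_s2 back_Om k t + 2 * back_s1 t - 2 * sqrt 3 * back_s2 t) * back_P t)) /\
  (forall t, derivable_pt_lim back_Om t
     (- 2 * (qr back_s1 back_s2 back_Om k t - (2 - k)) * back_Om t)).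
Proof.
  pose proof (derivable_pt_lim_reverse _ _ (fun t => proj1 (Hsol t))) as HSp.
  pose proof (derivable_pt_lim_reverse _ _ (fun t => proj1 (proj2 (Hsol t)))) as HSm.
  pose proof (derivable_pt_lim_reverse _ _ (fun t => proj1 (proj2 (proj2 (Hsol t))))) as HNp.
  pose proof (derivable_pt_lim_reverse _ _
                (fun t => proj1 (proj2 (proj2 (proj2 (Hsol t)))))) as HNm.
  pose proof (derivable_pt_lim_reverse _ _
                (fun t => proj2 (proj2 (proj2 (proj2 (Hsol t)))))) as HOm.
  cbv beta zeta in HSp, HSm, HNp, HNm, HOm.
  unfold qgap. repeat split; intros t;
    (eapply derivable_pt_lim_val;
       [|unfold back_s1, back_s2, back_M, back_P, back_Om; derive_poly]);
    rewrite back_q; unfold back_s1, back_s2, back_M, back_P, back_Om, k; cbv beta;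
    destruct (sign_cases sg Hsg) as [-> | ->]; field.
Qed.

Lemma back_constraint t :
  back_Om t + back_s1 t ^ 2 + back_s2 t ^ 2 + (back_M t + back_P t) ^ 2 / 4 = 1.
Proof.
  rewrite <- (constraint_preserved gamma phi Hsol H0 (- t)).
  unfold back_Om, back_s1, back_s2, back_M, back_P.
  destruct (sign_cases sg Hsg) as [-> | ->]; field.
Qed.

Lemma back_M_pos t : 0 < back_M t.
Proof. now apply (Nm_plus_Np_pos gamma phi). Qed.

Lemma back_P_pos t : 0 < back_P t.
Proof.
  unfold back_P. replace (_ - _) with (Nm (phi (- t)) + - sg * Np (phi (- t))) by ring.
  apply (Nm_plus_Np_pos gamma phi); auto. lra.
Qed.

Lemma backward_transition u1 u2 :
  2 / 3 < gamma < 2 -> u1 ^ 2 + u2 ^ 2 = 1 -> 0 < ell u1 u2 ->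
  (forall dl T, 0 < dl -> exists s, s <= T /\ Rabs (Sp (phi s) - u1) < dl /\
      Rabs (sg * Sm (phi s) - u2) < dl /\ Om (phi s) < dl /\
      Nm (phi s) - sg * Np (phi s) < dl) ->
  forall eps T, 0 < eps -> exists s, s <= T /\
    Rabs (Sp (phi s) - fst (kasner_image u1 u2)) <= eps /\
    Rabs (sg * Sm (phi s) - snd (kasner_image u1 u2)) <= eps.
Proof.
  intros Hg Hu Hl Hnear eps T Heps.
  destruct back_equations as (Hd1 & Hd2 & HdM & HdP & HdO).
  assert (Hk : 0 < k < 2) by (unfold k, qstar; lra).
  destruct (approaches_kasner_image back_s1 back_s2 back_M back_P back_Om k u1 u2
              Hd1 Hd2 HdM HdP HdO back_constraint (fun t => Om_nonneg gamma phi Hsol H0 (- t))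
              back_M_pos back_P_pos Hk Hu Hl) with (eps := eps) (T := - T)
    as (ts & Hts & Z1 & Z2); auto.
  - intros dl T' Hdl. destruct (Hnear dl (- T') Hdl) as (s & Hs & N1 & N2 & N3 & N4).
    exists (- s). unfold back_s1, back_s2, back_Om, back_P. rewrite Ropp_involutive.
    repeat split; auto; lra.
  - exists (- ts). split; [lra|]. split; auto.
Qed.

Lemma alpha_limit_near y :
  alpha_limit_point phi (kasner_state y) ->
  forall dl T, 0 < dl -> exists s, s <= T /\ Rabs (Sp (phi s) - fst y) < dl /\
    Rabs (sg * Sm (phi s) - sg * snd y) < dl /\ Om (phi s) < dl /\
    Nm (phi s) - sg * Np (phi s) < dl.
Proof.
  intros (tau & Htau & C1 & C2 & C3 & C4 & C5) dl T Hdl. cbn in C1, C2, C3, C4, C5.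
  destruct (Htau T) as [N0 HN0].
  destruct (C1 dl Hdl) as [N1 HN1]. destruct (C2 dl Hdl) as [N2 HN2].
  destruct (C3 (dl/2) ltac:(lra)) as [N3 HN3]. destruct (C4 (dl/2) ltac:(lra)) as [N4 HN4].
  destruct (C5 dl Hdl) as [N5 HN5].
  set (N := (N0 + N1 + N2 + N3 + N4 + N5)%nat).
  exists (tau N). unfold R_dist in *.
  specialize (HN0 N ltac:(unfold N; lia)). specialize (HN1 N ltac:(unfold N; lia)).
  specialize (HN2 N ltac:(unfold N; lia)). specialize (HN3 N ltac:(unfold N; lia)).
  specialize (HN4 N ltac:(unfold N; lia)). specialize (HN5 N ltac:(unfold N; lia)).
  rewrite Rminus_0_r in HN3, HN4, HN5.
  apply Rabs_def2 in HN3, HN4, HN5.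
  repeat split; try lra.
  - rewrite <- Rmult_minus_distr_l, Rabs_sign_mult; auto.
  - destruct (sign_cases sg Hsg) as [-> | ->]; lra.
Qed.

Lemma Om_Nm_small_near_circle z s e :
  on_circle z -> Rabs (Sp (phi s) - fst z) <= e -> Rabs (Sm (phi s) - snd z) <= e ->
  Om (phi s) + Nm (phi s) ^ 2 <= 4 * e.
Proof.
  intros Hz H1 H2. unfold on_circle in Hz.
  pose proof (constraint_preserved gamma phi Hsol H0 s) as Hc.
  pose proof (Om_nonneg gamma phi Hsol H0 s).
  assert (Rabs (Sp (phi s)) <= 1 /\ Rabs (Sm (phi s)) <= 1) as [S1 S2].
  { pose proof (pow2_ge_0 (Sp (phi s))). pose proof (pow2_ge_0 (Sm (phi s))).
    pose proof (pow2_ge_0 (Nm (phi s))). split; apply Rabs_le_of_sqr_le; nra. }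
  assert (Rabs (fst z) <= 1 /\ Rabs (snd z) <= 1) as [Z1 Z2].
  { pose proof (pow2_ge_0 (fst z)). pose proof (pow2_ge_0 (snd z)).
    split; apply Rabs_le_of_sqr_le; nra. }
  apply Rabs_le_between in H1, H2, S1, S2, Z1, Z2.
  replace (Om (phi s) + Nm (phi s) ^ 2) with
    ((fst z - Sp (phi s)) * (fst z + Sp (phi s)) + (snd z - Sm (phi s)) * (snd z + Sm (phi s)))
    by lra.
  nra.
Qed.

Lemma near_kasner_state z s m :
  on_circle z -> 1 <= m ->
  Rabs (Sp (phi s) - fst z) <= / (4 * m ^ 2) -> Rabs (Sm (phi s) - snd z) <= / (4 * m ^ 2) ->
  Rabs (Sp (phi s) - fst z) <= / m /\ Rabs (Sm (phi s) - snd z) <= / m /\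
  Rabs (Om (phi s)) <= / m /\ Rabs (Nm (phi s)) <= / m /\ Rabs (Np (phi s)) <= / m.
Proof.
  intros Hz Hm B1 B2.
  assert (He : / (4 * m ^ 2) <= / m / 4).
  { replace (/ m / 4) with (/ (4 * m)) by (field; lra). apply Rinv_le_contravar; nra. }
  assert (Hm2 : 4 * / (4 * m ^ 2) = / m * / m) by (field; lra).
  assert (Hinv : 0 < / m <= 1).
  { split; [apply Rinv_0_lt_compat; lra|]. rewrite <- Rinv_1. apply Rinv_le_contravar; lra. }
  pose proof (Om_Nm_small_near_circle z s _ Hz B1 B2).
  pose proof (Om_nonneg gamma phi Hsol H0 s).
  pose proof (Nm_plus_Np_pos gamma phi Hsol H0 1 s ltac:(ring)).
  pose proof (Nm_plus_Np_pos gamma phi Hsol H0 (-1) s ltac:(ring)).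
  assert (Nm (phi s) <= / m) by nra.
  repeat split; try lra; apply Rabs_le; nra.
Qed.

Lemma alpha_limit_of_approach z :
  on_circle z ->
  (forall eps T, 0 < eps -> exists s, s <= T /\
     Rabs (Sp (phi s) - fst z) <= eps /\ Rabs (Sm (phi s) - snd z) <= eps) ->
  alpha_limit_point phi (kasner_state z).
Proof.
  intros Hz Happ.
  assert (Hpick : forall n : nat, exists s, s <= - INR n /\
     Rabs (Sp (phi s) - fst z) <= / (4 * (INR n + 1) ^ 2) /\
     Rabs (Sm (phi s) - snd z) <= / (4 * (INR n + 1) ^ 2)).
  { intros n. apply Happ. pose proof (pos_INR n). apply Rinv_0_lt_compat. nra. }
  set (tau := fun n => proj1_sig (constructive_indefinite_description _ (Hpick n))).
  assert (Htau : forall n, tau n <= - INR n /\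
     Rabs (Sp (phi (tau n)) - fst z) <= / (4 * (INR n + 1) ^ 2) /\
     Rabs (Sm (phi (tau n)) - snd z) <= / (4 * (INR n + 1) ^ 2))
    by (intros n; exact (proj2_sig (constructive_indefinite_description _ (Hpick n)))).
  assert (Hbnd : forall n, _)
    by (intros n; destruct (Htau n) as (_ & B1 & B2);
        exact (near_kasner_state z (tau n) (INR n + 1) Hz
                 ltac:(pose proof (pos_INR n); lra) B1 B2)).
  exists tau. cbn [kasner_state Sp Sm Np Nm Om]. repeat split.
  - intros M. destruct (INR_archimed 1 (- M) ltac:(lra)) as [N HN].
    exists N. intros n Hn. destruct (Htau n) as [Ht _].
    assert (INR N <= INR n) by (apply le_INR; lia). lra.
  - apply Un_cv_rate. apply Hbnd.
  - apply Un_cv_rate. apply Hbnd.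
  - apply Un_cv_rate. intros n. rewrite Rminus_0_r. apply Hbnd.
  - apply Un_cv_rate. intros n. rewrite Rminus_0_r. apply Hbnd.
  - apply Un_cv_rate. intros n. rewrite Rminus_0_r. apply Hbnd.
Qed.

Lemma alpha_limit_kasner_image y :
  2 / 3 < gamma < 2 -> on_circle y -> 0 < ell (fst y) (sg * snd y) ->
  alpha_limit_point phi (kasner_state y) ->
  alpha_limit_point phi (kasner_state (sflip sg (kasner_image (fst y) (sg * snd y)))).
Proof.
  intros Hg Hy Hl Halpha.
  assert (Hy' : fst y ^ 2 + (sg * snd y) ^ 2 = 1).
  { unfold on_circle in Hy. rewrite <- Hy. destruct (sign_cases sg Hsg) as [-> | ->]; ring. }
  apply alpha_limit_of_approach.
  - apply on_circle_sflip; auto. now apply kasner_image_spec.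
  - intros eps T Heps.
    destruct (backward_transition (fst y) (sg * snd y) Hg Hy' Hl
                (alpha_limit_near y Halpha) eps T Heps) as (s & Hs & Z1 & Z2).
    exists s. unfold sflip; cbn [fst snd]. repeat split; auto.
    rewrite <- (Rabs_sign_mult sg) by auto.
    replace (sg * (Sm (phi s) - sg * snd (kasner_image (fst y) (sg * snd y))))
      with (sg * Sm (phi s) - sg * sg * snd (kasner_image (fst y) (sg * snd y))) by ring.
    now rewrite Hsg, Rmult_1_l.
Qed.
End Backward.

Theorem mainTheorem2 :
  forall (gamma : R), 2 / 3 < gamma < 2 ->
  forall (phi : R -> state), is_solution gamma phi -> in_B1plus (phi 0) ->
  forall (y : pt), (K2arc y \/ K3arc y) ->
  alpha_limit_point phi (kasner_state y) ->
  (exists z : pt, kasner_map_rel y z) /\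
  (forall z : pt, kasner_map_rel y z -> alpha_limit_point phi (kasner_state z)).
Proof.
  intros gamma Hg phi Hsol H0 y Hy Halpha.
  destruct (kasner_map_K2_K3 y Hy) as (sg & Hsg & Hc & Hl & Hrel).
  split.
  - exists (sflip sg (kasner_image (fst y) (sg * snd y))). now apply Hrel.
  - intros z Hz%Hrel. subst z. now apply (alpha_limit_kasner_image gamma phi Hsol H0 sg Hsg).
Qed.
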